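(* Let $X$ be a complex Banach space such that $A_u(B_X)=A(B_X)$. If $Y$ is a Banach space isomorphic to $X$ (i.e. there is a bounded linear bijection $T:Y\to X$ with bounded inverse), then $A_u(B_Y)=A(B_Y)$.
   Context: For a complex Banach space $Z$ with open unit ball $B_Z$: $A_u(B_Z)$ is the uniform algebra (supremum norm on $B_Z$) of bounded holomorphic functions on $B_Z$ that are uniformly continuous on $B_Z$; a finite type polynomial on $Z$ is a polynomial in finitely many elements of $Z^*$ (i.e. an element of the algebra generated by $Z^*$ and the constants); $A(B_Z)$ is the set of functions on $B_Z$ that are uniform limits on $B_Z$ of finite type polynomials. Always $A(B_Z)\subset A_u(B_Z)$. *)

From Stdlib Require Import Reals.
Open Scope R_scope.

Definition C : Type := (R * R)%type.
Definition C0 : C := (0, 0).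
Definition C1 : C := (1, 0).
Definition Cadd (a b : C) : C := (fst a + fst b, snd a + snd b).
Definition Copp (a : C) : C := (- fst a, - snd a).
Definition Cminus (a b : C) : C := Cadd a (Copp b).
Definition Cmul (a b : C) : C :=
  (fst a * fst b - snd a * snd b, fst a * snd b + snd a * fst b).
Definition Cmod (a : C) : R := sqrt (fst a ^ 2 + snd a ^ 2).

Record CBanach := {
  car :> Type;
  vzero : car;
  vadd : car -> car -> car;
  vopp : car -> car;
  vscal : C -> car -> car;
  vnorm : car -> R;
  vadd_assoc : forall x y z, vadd x (vadd y z) = vadd (vadd x y) z;
  vadd_comm : forall x y, vadd x y = vadd y x;
  vadd_0l : forall x, vadd vzero x = x;
  vadd_oppl : forall x, vadd (vopp x) x = vzero;
  vscal_assoc : forall a b x, vscal a (vscal b x) = vscal (Cmul a b) x;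
  vscal_1 : forall x, vscal C1 x = x;
  vscal_distr_v : forall a x y, vscal a (vadd x y) = vadd (vscal a x) (vscal a y);
  vscal_distr_s : forall a b x, vscal (Cadd a b) x = vadd (vscal a x) (vscal b x);
  vnorm_eq0 : forall x, vnorm x = 0 -> x = vzero;
  vnorm_triangle : forall x y, vnorm (vadd x y) <= vnorm x + vnorm y;
  vnorm_scal : forall a x, vnorm (vscal a x) = Cmod a * vnorm x;
  vcomplete : forall u : nat -> car,
    (forall eps, 0 < eps -> exists N, forall m n, (N <= m)%nat -> (N <= n)%nat ->
        vnorm (vadd (u m) (vopp (u n))) < eps) ->
    exists l, forall eps, 0 < eps -> exists N, forall n, (N <= n)%nat ->
        vnorm (vadd (u n) (vopp l)) < eps
}.

Arguments vzero {c}.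
Arguments vadd {c}.
Arguments vopp {c}.
Arguments vscal {c}.
Arguments vnorm {c}.

Definition vsub {X : CBanach} (x y : X) : X := vadd x (vopp y).

Definition inBall {X : CBanach} (x : X) : Prop := vnorm x < 1.

Definition is_linear {X Y : CBanach} (T : X -> Y) : Prop :=
  (forall x y, T (vadd x y) = vadd (T x) (T y)) /\
  (forall a x, T (vscal a x) = vscal a (T x)).

Definition is_bounded_op {X Y : CBanach} (T : X -> Y) : Prop :=
  exists M, forall x, vnorm (T x) <= M * vnorm x.

Definition in_dual {X : CBanach} (phi : X -> C) : Prop :=
  (forall x y, phi (vadd x y) = Cadd (phi x) (phi y)) /\
  (forall a x, phi (vscal a x) = Cmul a (phi x)) /\
  (exists M, forall x, Cmod (phi x) <= M * vnorm x).

Inductive finite_type_poly {X : CBanach} : (X -> C) -> Prop :=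
  | ftp_const : forall c : C, finite_type_poly (fun _ => c)
  | ftp_dual : forall phi, in_dual phi -> finite_type_poly phi
  | ftp_add : forall p q, finite_type_poly p -> finite_type_poly q ->
      finite_type_poly (fun x => Cadd (p x) (q x))
  | ftp_mul : forall p q, finite_type_poly p -> finite_type_poly q ->
      finite_type_poly (fun x => Cmul (p x) (q x)).

(** Functions on B_X are represented by functions X -> C; only their values
    on B_X matter for the predicates below. *)

Definition in_A {X : CBanach} (f : X -> C) : Prop :=
  forall eps, 0 < eps -> exists P, finite_type_poly P /\
    forall x : X, inBall x -> Cmod (Cminus (f x) (P x)) < eps.

Definition holomorphic_on_ball {X : CBanach} (f : X -> C) : Prop :=
  forall x : X, inBall x -> exists L, in_dual L /\
    forall eps, 0 < eps -> exists delta, 0 < delta /\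
      forall h : X, vnorm h < delta ->
        Cmod (Cminus (Cminus (f (vadd x h)) (f x)) (L h)) <= eps * vnorm h.

Definition bounded_on_ball {X : CBanach} (f : X -> C) : Prop :=
  exists M, forall x : X, inBall x -> Cmod (f x) <= M.

Definition unif_cont_on_ball {X : CBanach} (f : X -> C) : Prop :=
  forall eps, 0 < eps -> exists delta, 0 < delta /\
    forall x y : X, inBall x -> inBall y -> vnorm (vsub x y) < delta ->
      Cmod (Cminus (f x) (f y)) < eps.

Definition in_Au {X : CBanach} (f : X -> C) : Prop :=
  bounded_on_ball f /\ holomorphic_on_ball f /\ unif_cont_on_ball f.

Definition Au_eq_A (X : CBanach) : Prop :=
  forall f : X -> C, in_Au f <-> in_A f.

Definition isomorphic (Y X : CBanach) : Prop :=
  exists (T : Y -> X) (S : X -> Y),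
    is_linear T /\ is_bounded_op T /\ is_linear S /\ is_bounded_op S /\
    (forall y, S (T y) = y) /\ (forall x, T (S x) = x).

From Pilot Require Import Defs.
From Stdlib Require Import Reals Lra Lia ClassicalEpsilon FunctionalExtensionality Classical.
From mathcomp Require boolp classical_sets.
From Coquelicot Require Import Coquelicot.
Open Scope R_scope.

(** Let T : Y -> X be an isomorphism with inverse S.  Both inclusions for Y are
   obtained by moving functions between B_Y and B_X along T and S and invoking
   the hypothesis on X.

   - A(B_Y) ⊂ A_u(B_Y).  Boundedness and uniform continuity pass to uniform
     limits of finite type polynomials, which are bounded and Lipschitz on the
     ball.  For holomorphy at y0, the function x ↦ f(y0 + c·S x) lies in A(B_X)
     for small c > 0, hence in A_u(B_X); its derivative at 0 composed with T/c
     is a derivative of f at y0.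

   - A_u(B_Y) ⊂ A(B_Y).  Let K_S, K_T >= 1 bound ‖S‖, ‖T‖ and c = 1/(K_S K_T).
     For f ∈ A_u(B_Y), h = f ∘ (S/K_S) lies in A_u(B_X), so it is approximated
     on B_X by a finite type polynomial Q.  The homogeneous parts Q_j of Q,
     extracted by a discrete Fourier transform and hence again of finite type,
     give the approximant  y ↦ Σ_{j<N} (r/c)^j Q_j(T y / K_T).
     To compare it with f, the one-variable functions μ ↦ f(μ y) must be
     uniformly approximable by polynomials on the unit disc; this follows from
     the hypothesis on X applied to x ↦ f(φ(x) y), where φ is a norming
     functional provided by the Hahn–Banach theorem.  Cauchy estimates for
     polynomial coefficients control all the error terms. *)

(** The complex numbers of [Defs] are Coquelicot's, up to the names of the
    operations; [cnorm] switches to Coquelicot's names so that [ring], [field]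
    and the library lemmas on [Cmod] apply. *)
Lemma CaddF : Defs.Cadd = Coquelicot.Complex.Cplus. Proof. reflexivity. Qed.
Lemma CmulF : Defs.Cmul = Coquelicot.Complex.Cmult. Proof. reflexivity. Qed.
Lemma CoppF : Defs.Copp = Coquelicot.Complex.Copp. Proof. reflexivity. Qed.
Lemma CmodF : Defs.Cmod = Coquelicot.Complex.Cmod. Proof. reflexivity. Qed.
Lemma CminusF : Defs.Cminus = Coquelicot.Complex.Cminus. Proof. reflexivity. Qed.
Lemma C0E : Defs.C0 = RtoC 0. Proof. reflexivity. Qed.
Lemma C1E : Defs.C1 = RtoC 1. Proof. reflexivity. Qed.
Ltac cnorm := cbv beta in *; repeat rewrite ?CminusF, ?CaddF, ?CmulF, ?CoppF, ?CmodF, ?C0E, ?C1E in *;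
  change Defs.C with Coquelicot.Complex.C in *.

Lemma RtoC_plus a b : RtoC (a + b) = Cplus (RtoC a) (RtoC b).
Proof. apply injective_projections; simpl; ring. Qed.
Lemma RtoC_mult a b : RtoC (a * b) = Cmult (RtoC a) (RtoC b).
Proof. apply injective_projections; simpl; ring. Qed.

Lemma Cidem_zero (a : C) : Cplus a a = a -> a = RtoC 0.
Proof. intros H. replace a with (Cminus (Cplus a a) a) at 1 by ring. rewrite H. ring. Qed.

Lemma Cmod_sub_add (a b c d : C) :
  Cmod (Cminus (Cplus a b) (Cplus c d)) <= Cmod (Cminus a c) + Cmod (Cminus b d).
Proof.
  replace (Cminus (Cplus a b) (Cplus c d)) with (Cplus (Cminus a c) (Cminus b d)) by ring.
  apply Cmod_triangle.
Qed.

Lemma Cmod_sub_mul (a b c d : C) :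
  Cmod (Cminus (Cmult a b) (Cmult c d)) <= Cmod a * Cmod (Cminus b d) + Cmod d * Cmod (Cminus a c).
Proof.
  replace (Cminus (Cmult a b) (Cmult c d)) with (Cplus (Cmult a (Cminus b d)) (Cmult d (Cminus a c))) by ring.
  eapply Rle_trans. apply Cmod_triangle. rewrite !Cmod_mult. lra.
Qed.

Section VectorAlgebra.
Variable X : CBanach.
Implicit Types x y z : X.

Lemma vadd_0r x : vadd x vzero = x.
Proof. rewrite vadd_comm; apply vadd_0l. Qed.
Lemma vadd_oppr x : vadd x (vopp x) = vzero.
Proof. rewrite vadd_comm; apply vadd_oppl. Qed.
Lemma vadd_cancel_l x y z : vadd x y = vadd x z -> y = z.
Proof.
  intros H. rewrite <- (vadd_0l _ y), <- (vadd_0l _ z), <- (vadd_oppl _ x), <- !vadd_assoc, H; reflexivity.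
Qed.
Lemma vadd_idem x : vadd x x = x -> x = vzero.
Proof. intros H. apply (vadd_cancel_l x). rewrite vadd_0r. exact H. Qed.
Lemma vopp_unique x y : vadd x y = vzero -> y = vopp x.
Proof. intros H. apply (vadd_cancel_l x). rewrite H, vadd_oppr; reflexivity. Qed.
Lemma vadd_4 (a b c d : X) : vadd (vadd a b) (vadd c d) = vadd (vadd a c) (vadd b d).
Proof. rewrite !vadd_assoc. f_equal. rewrite <- !vadd_assoc. f_equal. apply vadd_comm. Qed.
Lemma vadd_swap (a b c d : X) : vadd a b = vadd c d -> vadd c (vopp a) = vadd b (vopp d).
Proof.
  intros E. transitivity (vadd (vadd (vadd c d) (vopp d)) (vopp a)).
  - rewrite <- (vadd_assoc _ c d), vadd_oppr, vadd_0r. auto.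
  - rewrite <- E, (vadd_comm _ _ (vopp a)), (vadd_assoc _ (vopp a)), (vadd_assoc _ (vopp a)),
      vadd_oppl, vadd_0l. auto.
Qed.

Lemma vscal_0 x : vscal (RtoC 0) x = vzero.
Proof.
  apply vadd_idem. rewrite <- vscal_distr_s. f_equal. cnorm. apply injective_projections; simpl; ring.
Qed.
Lemma vscal_m1 x : vscal (RtoC (-1)) x = vopp x.
Proof.
  apply vopp_unique. rewrite <- (vscal_1 _ x) at 1. rewrite <- vscal_distr_s.
  rewrite <- (vscal_0 x). f_equal. cnorm. apply injective_projections; simpl; ring.
Qed.
Lemma vscal_oppC a x : vscal (Coquelicot.Complex.Copp a) x = vopp (vscal a x).
Proof.
  apply vopp_unique. rewrite <- vscal_distr_s. rewrite <- (vscal_0 x). f_equal.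
  cnorm. apply injective_projections; simpl; ring.
Qed.
Lemma vscal_assocC a b x : vscal a (vscal b x) = vscal (Cmult a b) x.
Proof. apply vscal_assoc. Qed.
Lemma vscal_addC a b x : vscal (Cplus a b) x = vadd (vscal a x) (vscal b x).
Proof. apply vscal_distr_s. Qed.
Lemma vscal_1C x : vscal (RtoC 1) x = x.
Proof. apply vscal_1. Qed.
Lemma vsub_scal_l (a b : C) x : vsub (vscal a x) (vscal b x) = vscal (Cminus a b) x.
Proof. unfold vsub. cnorm. unfold Coquelicot.Complex.Cminus. rewrite vscal_addC, vscal_oppC. reflexivity. Qed.

Lemma vnorm_zero : vnorm (@vzero X) = 0.
Proof. rewrite <- (vscal_0 vzero), vnorm_scal. cnorm. rewrite Cmod_0; ring. Qed.
Lemma vnorm_opp x : vnorm (vopp x) = vnorm x.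
Proof.
  rewrite <- vscal_m1, vnorm_scal. cnorm.
  replace (RtoC (-1)) with (Coquelicot.Complex.Copp (RtoC 1)) by (apply injective_projections; simpl; ring).
  rewrite Cmod_opp, Cmod_1; ring.
Qed.
Lemma vnorm_ge0 x : 0 <= vnorm x.
Proof.
  pose proof (vnorm_triangle _ x (vopp x)) as H. rewrite vadd_oppr, vnorm_zero, vnorm_opp in H. lra.
Qed.
Lemma vnorm_pos x : x <> vzero -> 0 < vnorm x.
Proof.
  intros H. destruct (vnorm_ge0 x) as [h|h]; auto. exfalso; apply H, vnorm_eq0; auto.
Qed.
Lemma vnorm_scalR (t : R) x : vnorm (vscal (RtoC t) x) = Rabs t * vnorm x.
Proof. rewrite vnorm_scal. cnorm. rewrite Cmod_R. reflexivity. Qed.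

Lemma inBall_scal (mu : C) x : Cmod mu < 1 -> vnorm x <= 1 -> inBall (vscal mu x).
Proof.
  intros Hmu Hx. unfold inBall. rewrite vnorm_scal. cnorm.
  pose proof (Cmod_ge_0 mu). pose proof (vnorm_ge0 x). nra.
Qed.
End VectorAlgebra.

Section Functionals.
Context {X : CBanach}.

Lemma dual_add (phi : X -> Defs.C) x y : in_dual phi -> phi (vadd x y) = Cplus (phi x) (phi y).
Proof. intros [H _]. apply H. Qed.
Lemma dual_scal (phi : X -> Defs.C) a x : in_dual phi -> phi (vscal a x) = Cmult a (phi x).
Proof. intros [_ [H _]]. apply H. Qed.
Lemma dual_zero (phi : X -> Defs.C) : in_dual phi -> phi vzero = RtoC 0.
Proof.
  intros Hp. apply Cidem_zero. pose proof (dual_add phi vzero vzero Hp) as H.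
  rewrite vadd_0l in H. cnorm. auto.
Qed.
Lemma dual_opp (phi : X -> Defs.C) x : in_dual phi -> phi (vopp x) = Copp (phi x).
Proof.
  intros Hp. pose proof (dual_add phi x (vopp x) Hp) as H. rewrite vadd_oppr, dual_zero in H by auto.
  cnorm. replace (phi (vopp x)) with (Cplus (Cplus (phi x) (phi (vopp x))) (Copp (phi x))) by ring.
  rewrite <- H. ring.
Qed.
Lemma dual_sub (phi : X -> Defs.C) x y : in_dual phi -> phi (vsub x y) = Cminus (phi x) (phi y).
Proof. intros Hp. unfold vsub. rewrite dual_add, dual_opp by auto. cnorm. ring. Qed.
Lemma dual_bound (phi : X -> Defs.C) :
  in_dual phi -> exists M, 0 <= M /\ forall x, Cmod (phi x) <= M * vnorm x.
Proof.
  intros [_ [_ [M HM]]]. exists (Rmax M 0). split. apply Rmax_r.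
  intros x. eapply Rle_trans. apply HM. apply Rmult_le_compat_r. apply vnorm_ge0. apply Rmax_l.
Qed.
End Functionals.

Section LinearMaps.
Context {X Y : CBanach}.

Lemma lin_zero (L : X -> Y) : Defs.is_linear L -> L vzero = vzero.
Proof. intros [Ha _]. apply vadd_idem. rewrite <- Ha, vadd_0l. auto. Qed.
Lemma lin_opp (L : X -> Y) x : Defs.is_linear L -> L (vopp x) = vopp (L x).
Proof.
  intros HL. apply vopp_unique. rewrite <- (proj1 HL), vadd_oppr. apply lin_zero; auto.
Qed.
Lemma lin_sub (L : X -> Y) x y : Defs.is_linear L -> L (vsub x y) = vsub (L x) (L y).
Proof. intros HL. unfold vsub. rewrite (proj1 HL), lin_opp; auto. Qed.

Lemma bounded_ge1 (L : X -> Y) :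
  is_bounded_op L -> exists M, 1 <= M /\ forall x, vnorm (L x) <= M * vnorm x.
Proof.
  intros [M HM]. exists (Rmax M 1). split. apply Rmax_r.
  intros x. eapply Rle_trans. apply HM. apply Rmult_le_compat_r. apply vnorm_ge0. apply Rmax_l.
Qed.

Lemma lin_scal_comp (a : C) (L : X -> Y) : Defs.is_linear L -> Defs.is_linear (fun x => vscal a (L x)).
Proof.
  intros [Ha Hs]. split.
  - intros x y. rewrite Ha, vscal_distr_v; auto.
  - intros b x. rewrite Hs, !vscal_assocC. f_equal. cnorm. ring.
Qed.
Lemma bounded_scal_comp (a : C) (L : X -> Y) : is_bounded_op L -> is_bounded_op (fun x => vscal a (L x)).
Proof.
  intros HB. destruct (bounded_ge1 L HB) as [K [_ HK]]. exists (Cmod a * K). intros x.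
  rewrite vnorm_scal. cnorm. rewrite Rmult_assoc. apply Rmult_le_compat_l. apply Cmod_ge_0. auto.
Qed.

Lemma dual_comp (phi : Y -> Defs.C) (L : X -> Y) :
  in_dual phi -> Defs.is_linear L -> is_bounded_op L -> in_dual (fun x => phi (L x)).
Proof.
  intros Hp HL HB. destruct (dual_bound phi Hp) as [M [HM0 HM]]. destruct (bounded_ge1 L HB) as [K [_ HK]].
  split; [|split].
  - intros x y. rewrite (proj1 HL). apply dual_add; auto.
  - intros a x. rewrite (proj2 HL). apply dual_scal; auto.
  - exists (M * K). intros x. eapply Rle_trans. apply HM. rewrite Rmult_assoc.
    apply Rmult_le_compat_l; auto.
Qed.
End LinearMaps.

Lemma lin_id {X : CBanach} : Defs.is_linear (fun x : X => x).
Proof. split; auto. Qed.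
Lemma bounded_id {X : CBanach} : is_bounded_op (fun x : X => x).
Proof. exists 1. intros; lra. Qed.

Fixpoint csum (n : nat) (F : nat -> C) : C :=
  match n with O => RtoC 0 | S n => Cplus (csum n F) (F n) end.
Fixpoint rsum (n : nat) (F : nat -> R) : R :=
  match n with O => 0 | S n => rsum n F + F n end.

Lemma csum_ext n F G : (forall i, (i < n)%nat -> F i = G i) -> csum n F = csum n G.
Proof. induction n; simpl; intros H; auto. rewrite IHn, H; auto. Qed.
Lemma csum_add n F G : csum n (fun i => Cplus (F i) (G i)) = Cplus (csum n F) (csum n G).
Proof. induction n; simpl. apply injective_projections; simpl; ring. rewrite IHn. ring. Qed.
Lemma csum_sub n F G : Cminus (csum n F) (csum n G) = csum n (fun i => Cminus (F i) (G i)).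
Proof. induction n; simpl. ring. rewrite <- IHn. ring. Qed.
Lemma csum_scal n a F : csum n (fun i => Cmult a (F i)) = Cmult a (csum n F).
Proof. induction n; simpl. apply injective_projections; simpl; ring. rewrite IHn. ring. Qed.
Lemma csum_shift m F : csum (S m) F = Cplus (F O) (csum m (fun i => F (S i))).
Proof.
  induction m. simpl. ring. change (csum (S (S m)) F) with (Cplus (csum (S m) F) (F (S m))).
  rewrite IHm. simpl. ring.
Qed.
Lemma csum_zero_tail n m F :
  (n <= m)%nat -> (forall i, (n <= i)%nat -> F i = RtoC 0) -> csum m F = csum n F.
Proof. intros Hnm H. induction Hnm; auto. simpl. rewrite IHHnm, H by lia. ring. Qed.
Lemma csum_swap n m (F : nat -> nat -> C) :
  csum n (fun i => csum m (fun j => F i j)) = csum m (fun j => csum n (fun i => F i j)).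
Proof.
  induction n; simpl.
  - induction m; simpl; auto. rewrite <- IHm. ring.
  - rewrite IHn. rewrite <- csum_add. reflexivity.
Qed.
Lemma csum_delta n j (a : nat -> C) :
  csum n (fun i => if Nat.eqb i j then a i else RtoC 0) = if Nat.ltb j n then a j else RtoC 0.
Proof.
  induction n; simpl. reflexivity. rewrite IHn.
  destruct (Nat.eqb_spec n j); destruct (Nat.ltb_spec j n); destruct (Nat.ltb_spec j (S n)); try lia; subst; ring.
Qed.
Lemma csum_split N n F : (N <= n)%nat ->
  Cminus (csum n F) (csum N F) = csum n (fun i => if Nat.ltb i N then RtoC 0 else F i).
Proof.
  intros HN.
  assert (E1 : csum N F = csum n (fun i => if Nat.ltb i N then F i else RtoC 0)).
  { rewrite (csum_zero_tail N n); auto.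
    - apply csum_ext; intros i Hi. destruct (Nat.ltb_spec i N); lia || auto.
    - intros i Hi. destruct (Nat.ltb_spec i N); try lia; auto. }
  assert (E2 : csum n F = Cplus (csum n (fun i => if Nat.ltb i N then F i else RtoC 0))
                                (csum n (fun i => if Nat.ltb i N then RtoC 0 else F i))).
  { rewrite <- csum_add. apply csum_ext; intros. destruct (Nat.ltb i N); ring. }
  rewrite E2, E1. ring.
Qed.

Lemma csum_norm n F : Cmod (csum n F) <= rsum n (fun i => Cmod (F i)).
Proof.
  induction n; cbn [csum rsum]. rewrite Cmod_0; lra. eapply Rle_trans. apply Cmod_triangle. lra.
Qed.
Lemma rsum_le n F G : (forall i, (i < n)%nat -> F i <= G i) -> rsum n F <= rsum n G.
Proof. induction n; simpl; intros H. lra. pose proof (H n ltac:(lia)). pose proof (IHn ltac:(auto)). lra. Qed.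
Lemma rsum_const n c : rsum n (fun _ => c) = INR n * c.
Proof. induction n; simpl rsum. simpl; ring. rewrite IHn, S_INR; ring. Qed.
Lemma rsum_scal n a F : rsum n (fun i => a * F i) = a * rsum n F.
Proof. induction n; simpl. ring. rewrite IHn. ring. Qed.

Lemma geom_tail q N n : 0 <= q < 1 ->
  rsum n (fun i => if Nat.ltb i N then 0 else q ^ i) <= q ^ N / (1 - q).
Proof.
  intros Hq.
  assert (E : rsum n (fun i => if Nat.ltb i N then 0 else q ^ i) =
              if Nat.leb n N then 0 else (q ^ N - q ^ n) / (1 - q)).
  { induction n; simpl rsum.
    - destruct (Nat.leb_spec 0 N); try lia. reflexivity.
    - rewrite IHn. destruct (Nat.ltb_spec n N); destruct (Nat.leb_spec n N);
        destruct (Nat.leb_spec (S n) N); try lia.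
      + lra.
      + assert (n = N) by lia. subst. simpl. field. lra.
      + simpl. field. lra. }
  rewrite E. assert (0 <= q ^ N) by (apply pow_le; lra). assert (0 <= q ^ n) by (apply pow_le; lra).
  destruct (Nat.leb n N). apply Rdiv_le_0_compat; lra.
  unfold Rdiv. apply Rmult_le_compat_r. left; apply Rinv_0_lt_compat; lra. lra.
Qed.

(** [IsPoly p n]: [p] is a polynomial function with at most [n] coefficients. *)
Definition IsPoly (p : C -> C) (n : nat) :=
  exists c : nat -> C, forall mu, p mu = csum n (fun i => Cmult (c i) (Cpow mu i)).

Lemma Cpow_mult a b k : Cpow (Cmult a b) k = Cmult (Cpow a k) (Cpow b k).
Proof. induction k; simpl. ring. rewrite IHk. ring. Qed.
Lemma Cpow_RtoC r k : Cpow (RtoC r) k = RtoC (r ^ k).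
Proof. induction k; simpl. reflexivity. rewrite IHk. apply injective_projections; simpl; ring. Qed.

Lemma poly_pad (p : C -> C) (c : nat -> C) n m : (n <= m)%nat ->
  (forall mu, p mu = csum n (fun i => Cmult (c i) (Cpow mu i))) ->
  forall mu, p mu = csum m (fun i => Cmult (if Nat.ltb i n then c i else RtoC 0) (Cpow mu i)).
Proof.
  intros Hnm Hc mu. rewrite Hc, (csum_zero_tail n m) by
    (auto; intros i Hi; destruct (Nat.ltb_spec i n); try lia; ring).
  apply csum_ext; intros i Hi. destruct (Nat.ltb_spec i n); try lia; auto.
Qed.

Lemma IsPoly_ext p q n : IsPoly p n -> (forall mu, p mu = q mu) -> IsPoly q n.
Proof. intros [c Hc] H. exists c; intros; rewrite <- H; auto. Qed.
Lemma IsPoly_mono p n m : IsPoly p n -> (n <= m)%nat -> IsPoly p m.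
Proof. intros [c Hc] Hnm. eexists. apply (poly_pad p c n m Hnm Hc). Qed.
Lemma IsPoly_const a : IsPoly (fun _ => a) 1.
Proof. exists (fun _ => a); intros; simpl. ring. Qed.
Lemma IsPoly_scal a p n : IsPoly p n -> IsPoly (fun mu => Cmult a (p mu)) n.
Proof.
  intros [c Hc]. exists (fun i => Cmult a (c i)); intros. rewrite Hc, <- csum_scal.
  apply csum_ext; intros; ring.
Qed.
Lemma IsPoly_shift p n : IsPoly p n -> IsPoly (fun mu => Cmult mu (p mu)) (S n).
Proof.
  intros [c Hc]. exists (fun i => match i with O => RtoC 0 | S j => c j end); intros.
  rewrite csum_shift, Hc, <- csum_scal. simpl.
  replace (Cmult (RtoC 0) (RtoC 1)) with (RtoC 0) by ring.
  rewrite Cplus_0_l. apply csum_ext; intros; simpl; ring.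
Qed.
Lemma IsPoly_add p q n m :
  IsPoly p n -> IsPoly q m -> IsPoly (fun mu => Cplus (p mu) (q mu)) (Nat.max n m).
Proof.
  intros Hp Hq. apply (IsPoly_mono _ _ (Nat.max n m)) in Hp; try lia.
  apply (IsPoly_mono _ _ (Nat.max n m)) in Hq; try lia.
  destruct Hp as [c Hc], Hq as [d Hd]. exists (fun i => Cplus (c i) (d i)); intros.
  rewrite Hc, Hd, <- csum_add. apply csum_ext; intros; ring.
Qed.
Lemma IsPoly_mul p q n m :
  IsPoly p n -> IsPoly q m -> IsPoly (fun mu => Cmult (p mu) (q mu)) (n + m).
Proof.
  revert p. induction n; intros p [c Hc] Hq.
  - exists (fun _ => RtoC 0); intros. rewrite Hc. simpl. rewrite Cmult_0_l.
    clear. induction m; simpl; auto. rewrite <- IHm. ring.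
  - (* p(μ) = c_0 + μ·p'(μ) with p' of degree < n *)
    assert (Hp' : IsPoly (fun mu => csum n (fun i => Cmult (c (S i)) (Cpow mu i))) n)
      by (exists (fun i => c (S i)); auto).
    pose proof (IsPoly_add _ _ _ _ (IsPoly_scal (c O) _ _ Hq) (IsPoly_shift _ _ (IHn _ Hp' Hq))) as H.
    replace (S n + m)%nat with (Nat.max m (S (n + m))) by lia.
    eapply IsPoly_ext; [exact H|]. intros mu. cbv beta. rewrite Hc, csum_shift.
    assert (E : csum n (fun i => Cmult (c (S i)) (Cpow mu (S i))) =
                Cmult mu (csum n (fun i => Cmult (c (S i)) (Cpow mu i)))).
    { rewrite <- csum_scal. apply csum_ext; intros; simpl; ring. }
    rewrite E. simpl Cpow. ring.
Qed.

(** ** Roots of unity and Fourier coefficients *)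

Definition Eu (t : R) : C := (cos t, sin t).

Lemma Eu_mult a b : Cmult (Eu a) (Eu b) = Eu (a + b).
Proof. unfold Eu. rewrite cos_plus, sin_plus. apply injective_projections; simpl; ring. Qed.
Lemma Eu_mod a : Cmod (Eu a) = 1.
Proof.
  unfold Eu, Cmod. simpl fst; simpl snd. replace (cos a ^ 2 + sin a ^ 2) with 1. apply sqrt_1.
  rewrite <- (sin2_cos2 a). unfold Rsqr. ring.
Qed.
Lemma Eu_0 : Eu 0 = RtoC 1.
Proof. unfold Eu. rewrite cos_0, sin_0. reflexivity. Qed.
Lemma Eu_pow a k : Cpow (Eu a) k = Eu (INR k * a).
Proof.
  induction k. simpl. rewrite Rmult_0_l, Eu_0. reflexivity.
  simpl Cpow. rewrite IHk, Eu_mult. f_equal. rewrite S_INR. ring.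
Qed.
Lemma Eu_int (i j : nat) : Eu (2 * PI * (INR i - INR j)) = RtoC 1.
Proof.
  assert (Hn : forall n : nat, Eu (2 * PI * INR n) = RtoC 1).
  { intros n. unfold Eu. replace (2 * PI * INR n) with (0 + 2 * INR n * PI) by ring.
    rewrite cos_period, sin_period, cos_0, sin_0. reflexivity. }
  replace (2 * PI * (INR i - INR j)) with (2 * PI * INR i + - (2 * PI * INR j)) by ring.
  rewrite <- Eu_mult, Hn. unfold Eu. rewrite cos_neg, sin_neg.
  pose proof (Hn j) as E. unfold Eu in E. injection E as E1 E2. rewrite E1, E2.
  apply injective_projections; simpl; ring.
Qed.
Lemma Eu_ne1 a : 0 < Rabs a < 2 * PI -> Eu a <> RtoC 1.
Proof.
  intros [H1 H2] E. unfold Eu in E. injection E as Ec Es.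
  pose proof PI_RGT_0.
  destruct (Rle_or_lt 0 a).
  - rewrite Rabs_right in * by lra.
    destruct (Rlt_or_le a PI). pose proof (sin_gt_0 a ltac:(lra) H3). lra.
    destruct H3. pose proof (sin_lt_0 a H3 ltac:(lra)). lra.
    subst. rewrite cos_PI in Ec. lra.
  - rewrite Rabs_left in * by lra.
    destruct (Rlt_or_le (-a) PI). pose proof (sin_gt_0 (-a) ltac:(lra) H3). rewrite sin_neg in H4. lra.
    destruct H3. pose proof (sin_lt_0 (-a) H3 ltac:(lra)). rewrite sin_neg in H4. lra.
    replace a with (- PI) in Ec by lra. rewrite cos_neg, cos_PI in Ec. lra.
Qed.

Lemma geom_Eu a m : Eu a <> RtoC 1 -> Eu (INR m * a) = RtoC 1 ->
  csum m (fun k => Eu (INR k * a)) = RtoC 0.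
Proof.
  intros H1 H2.
  assert (T : forall n, Cmult (Cminus (Eu a) (RtoC 1)) (csum n (fun k => Eu (INR k * a))) =
                        Cminus (Eu (INR n * a)) (RtoC 1)).
  { induction n. simpl. rewrite Rmult_0_l, Eu_0. ring.
    simpl csum. rewrite Cmult_plus_distr_l, IHn.
    replace (Eu (INR (S n) * a)) with (Cmult (Eu a) (Eu (INR n * a))). ring.
    rewrite Eu_mult. f_equal. rewrite S_INR; ring. }
  specialize (T m). rewrite H2 in T. replace (Cminus (RtoC 1) (RtoC 1)) with (RtoC 0) in T by ring.
  destruct (classic (csum m (fun k => Eu (INR k * a)) = RtoC 0)) as [?|Hn]; auto. exfalso.
  assert (Cminus (Eu a) (RtoC 1) <> RtoC 0).
  { intro T'. apply H1. replace (Eu a) with (Cplus (Cminus (Eu a) (RtoC 1)) (RtoC 1)) by ring. rewrite T'. ring. }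
  exact (Cmult_neq_0 _ _ H Hn T).
Qed.

Lemma sum_Eu_delta m i j : (0 < m)%nat -> (i < m)%nat -> (j < m)%nat ->
  csum m (fun k => Eu (INR k * (2 * PI * (INR i - INR j) / INR m))) =
  if Nat.eqb i j then RtoC (INR m) else RtoC 0.
Proof.
  intros Hm Hi Hj. pose proof PI_RGT_0. assert (0 < INR m) by (apply lt_0_INR; lia).
  destruct (Nat.eqb_spec i j).
  - subst. replace (fun k => Eu (INR k * (2 * PI * (INR j - INR j) / INR m))) with (fun _ : nat => RtoC 1).
    + clear. induction m. reflexivity. simpl csum. rewrite IHm, S_INR.
      apply injective_projections; simpl; ring.
    + apply functional_extensionality; intros. rewrite <- Eu_0. f_equal. field. lra.
  - apply geom_Eu.
    + apply Eu_ne1. assert (INR i <> INR j) by (intro E; apply INR_eq in E; auto).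
      assert (INR i < INR m) by (apply lt_INR; auto). assert (INR j < INR m) by (apply lt_INR; auto).
      pose proof (pos_INR i). pose proof (pos_INR j).
      unfold Rdiv. rewrite Rabs_mult, Rabs_mult, Rabs_right with (r := 2 * PI) by lra.
      rewrite Rabs_right with (r := / INR m) by (left; apply Rinv_0_lt_compat; lra).
      split.
      * apply Rmult_lt_0_compat; [|apply Rinv_0_lt_compat; lra]. apply Rmult_lt_0_compat. lra.
        apply Rabs_pos_lt. lra.
      * apply (Rmult_lt_reg_r (INR m)); auto. rewrite Rmult_assoc, Rinv_l by lra.
        rewrite Rmult_1_r. apply Rmult_lt_compat_l. lra. apply Rabs_def1; lra.
    + replace (INR m * (2 * PI * (INR i - INR j) / INR m)) with (2 * PI * (INR i - INR j)).
      apply Eu_int. field. lra.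
Qed.

Definition DFT (m : nat) (p : C -> C) (j : nat) (rho : R) : C :=
  Cmult (RtoC (/ INR m)) (csum m (fun k => Cmult (Eu (- (INR j * (INR k * (2 * PI / INR m)))))
     (p (Cmult (RtoC rho) (Eu (INR k * (2 * PI / INR m))))))).

Lemma DFT_poly m p (c : nat -> C) n j rho : (0 < m)%nat -> (n <= m)%nat -> (j < m)%nat ->
  (forall mu, p mu = csum n (fun i => Cmult (c i) (Cpow mu i))) ->
  DFT m p j rho = Cmult (if Nat.ltb j n then c j else RtoC 0) (RtoC (rho ^ j)).
Proof.
  intros Hm Hn Hj Hp. unfold DFT. pose proof PI_RGT_0. assert (0 < INR m) by (apply lt_0_INR; lia).
  transitivity (Cmult (RtoC (/ INR m)) (csum m (fun k => csum n (fun i =>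
     Cmult (Cmult (c i) (RtoC (rho ^ i))) (Eu (INR k * (2 * PI * (INR i - INR j) / INR m))))))).
  { f_equal. apply csum_ext; intros k Hk. rewrite Hp, <- csum_scal. apply csum_ext; intros i Hi.
    rewrite Cpow_mult, Eu_pow, Cpow_RtoC.
    replace (Eu (INR k * (2 * PI * (INR i - INR j) / INR m))) with
      (Cmult (Eu (- (INR j * (INR k * (2 * PI / INR m))))) (Eu (INR i * (INR k * (2 * PI / INR m))))).
    ring. rewrite Eu_mult. f_equal. field. lra. }
  rewrite csum_swap.
  transitivity (Cmult (RtoC (/ INR m)) (csum n (fun i => if Nat.eqb i j
     then Cmult (Cmult (c i) (RtoC (rho ^ i))) (RtoC (INR m)) else RtoC 0))).
  { f_equal. apply csum_ext; intros i Hi. rewrite csum_scal, sum_Eu_delta by lia.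
    destruct (Nat.eqb i j); ring. }
  rewrite csum_delta. destruct (Nat.ltb_spec j n).
  - replace (RtoC (/ INR m)) with (Cinv (RtoC (INR m))).
    + field. intro E. injection E. lra.
    + unfold Cinv. simpl. apply injective_projections; simpl; field; lra.
  - ring.
Qed.

Lemma DFT_bound m p j rho eta : (0 < m)%nat -> 0 <= rho ->
  (forall mu, Cmod mu = rho -> Cmod (p mu) <= eta) -> Cmod (DFT m p j rho) <= eta.
Proof.
  intros Hm Hr H. unfold DFT. assert (0 < INR m) by (apply lt_0_INR; lia).
  rewrite Cmod_mult, Cmod_R, Rabs_right by (left; apply Rinv_0_lt_compat; lra).
  apply (Rmult_le_reg_l (INR m)); auto. rewrite <- Rmult_assoc, Rinv_r, Rmult_1_l by lra.
  eapply Rle_trans. apply csum_norm. rewrite Rmult_comm, <- rsum_const. apply rsum_le. intros k Hk.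
  rewrite Cmod_mult, Eu_mod, Rmult_1_l. apply H. rewrite Cmod_mult, Eu_mod, Cmod_R, Rabs_right; lra.
Qed.

(** ** Cauchy estimates *)

Lemma cauchy_estimate (c : nat -> C) n (p : C -> C) rho eta : 0 < rho ->
  (forall mu, p mu = csum n (fun i => Cmult (c i) (Cpow mu i))) ->
  (forall mu, Cmod mu = rho -> Cmod (p mu) <= eta) ->
  forall j, (j < n)%nat -> Cmod (c j) * rho ^ j <= eta.
Proof.
  intros Hr Hp Hb j Hj.
  pose proof (DFT_poly n p c n j rho ltac:(lia) ltac:(lia) Hj Hp) as E.
  destruct (Nat.ltb_spec j n) as [_|]; try lia.
  pose proof (DFT_bound n p j rho eta ltac:(lia) ltac:(lra) Hb) as H.
  rewrite E, Cmod_mult, Cmod_R, Rabs_right in H; auto.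
  apply Rle_ge, pow_le; lra.
Qed.

Lemma coeff_compare (a b : nat -> C) na nb (p q : C -> C) rho eta : 0 < rho ->
  (forall mu, p mu = csum na (fun i => Cmult (a i) (Cpow mu i))) ->
  (forall mu, q mu = csum nb (fun i => Cmult (b i) (Cpow mu i))) ->
  (forall mu, Cmod mu = rho -> Cmod (Cminus (p mu) (q mu)) <= eta) ->
  forall j, (j < na)%nat -> (j < nb)%nat -> Cmod (Cminus (a j) (b j)) * rho ^ j <= eta.
Proof.
  intros Hr Hp Hq Hb j Hja Hjb.
  set (a' := fun i => if Nat.ltb i na then a i else RtoC 0).
  set (b' := fun i => if Nat.ltb i nb then b i else RtoC 0).
  assert (Hd : forall mu, Cminus (p mu) (q mu) =
     csum (na + nb) (fun i => Cmult (Cminus (a' i) (b' i)) (Cpow mu i))).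
  { intros mu. rewrite (poly_pad p a na (na + nb)), (poly_pad q b nb (na + nb)) by (auto; lia).
    rewrite csum_sub. apply csum_ext; intros. unfold a', b'. ring. }
  pose proof (cauchy_estimate _ _ _ rho eta Hr Hd Hb j ltac:(lia)) as H.
  unfold a', b' in H. destruct (Nat.ltb_spec j na), (Nat.ltb_spec j nb); try lia. exact H.
Qed.

Lemma poly_tail (e : nat -> C) n N (p : C -> C) B r rho : 0 <= r < rho -> (N <= n)%nat ->
  (forall mu, p mu = csum n (fun i => Cmult (e i) (Cpow mu i))) ->
  (forall mu, Cmod mu = rho -> Cmod (p mu) <= B) ->
  Cmod (Cminus (p (RtoC r)) (csum N (fun i => Cmult (e i) (Cpow (RtoC r) i)))) <=
  B * ((r / rho) ^ N / (1 - r / rho)).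
Proof.
  intros Hr HN Hp HB. set (q := r / rho).
  assert (Hq : 0 <= q < 1).
  { unfold q. split. apply Rdiv_le_0_compat; lra.
    apply (Rmult_lt_reg_r rho). lra. unfold Rdiv. rewrite Rmult_assoc, Rinv_l; lra. }
  pose proof (cauchy_estimate e n p rho B ltac:(lra) Hp HB) as Hc.
  rewrite Hp, (csum_split N n) by auto.
  eapply Rle_trans. apply csum_norm.
  eapply Rle_trans with (rsum n (fun i => B * (if Nat.ltb i N then 0 else q ^ i))).
  - apply rsum_le. intros i Hi. destruct (Nat.ltb i N).
    + rewrite Cmod_0. lra.
    + rewrite Cmod_mult, Cpow_RtoC, Cmod_R, Rabs_right by (apply Rle_ge, pow_le; lra).
      replace (r ^ i) with (rho ^ i * q ^ i)
        by (rewrite <- Rpow_mult_distr; f_equal; unfold q; field; lra).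
      rewrite <- Rmult_assoc. apply Rmult_le_compat_r. apply pow_le; lra. apply Hc; auto.
  - rewrite rsum_scal. assert (0 <= B).
    { specialize (HB (RtoC rho)). rewrite Cmod_R, Rabs_right in HB by lra.
      pose proof (Cmod_ge_0 (p (RtoC rho))). lra. }
    apply Rmult_le_compat_l; auto. apply geom_tail; auto.
Qed.

Lemma rescaled_sum_compare (a b : nat -> C) N c r eta : 0 < c <= 1 -> 0 <= r <= 1 ->
  (forall j, (j < N)%nat -> Cmod (Cminus (Cmult (a j) (RtoC (c ^ j))) (b j)) * (1 / 2) ^ j <= eta) ->
  Cmod (Cminus (csum N (fun j => Cmult (a j) (Cpow (RtoC r) j)))
               (csum N (fun j => Cmult (RtoC ((r / c) ^ j)) (b j)))) <= INR N * ((2 / c) ^ N * eta).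
Proof.
  intros Hc Hr Hab. rewrite csum_sub.
  eapply Rle_trans. apply csum_norm. rewrite <- rsum_const. apply rsum_le. intros j Hj.
  assert (Eq : Cminus (Cmult (a j) (Cpow (RtoC r) j)) (Cmult (RtoC ((r / c) ^ j)) (b j)) =
     Cmult (RtoC ((r / c) ^ j * 2 ^ j))
           (Cmult (Cminus (Cmult (a j) (RtoC (c ^ j))) (b j)) (RtoC ((1 / 2) ^ j)))).
  { rewrite Cpow_RtoC. replace (r ^ j) with ((r / c) ^ j * c ^ j)
      by (rewrite <- Rpow_mult_distr; f_equal; field; lra).
    assert (E2 : Cmult (RtoC (2 ^ j)) (RtoC ((1 / 2) ^ j)) = RtoC 1).
    { rewrite <- RtoC_mult, <- Rpow_mult_distr. replace (2 * (1 / 2)) with 1 by field.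
      rewrite pow1. reflexivity. }
    rewrite !RtoC_mult.
    transitivity (Cmult (Cmult (RtoC ((r / c) ^ j)) (Cminus (Cmult (a j) (RtoC (c ^ j))) (b j)))
                        (Cmult (RtoC (2 ^ j)) (RtoC ((1 / 2) ^ j)))).
    - rewrite E2. ring.
    - ring. }
  rewrite Eq, Cmod_mult, Cmod_mult, Cmod_R, Cmod_R, Rabs_right, (Rabs_right ((1 / 2) ^ j)).
  2: apply Rle_ge, pow_le; lra.
  2: apply Rle_ge, Rmult_le_pos; apply pow_le; try lra; apply Rdiv_le_0_compat; lra.
  apply Rmult_le_compat.
  - apply Rmult_le_pos; apply pow_le; try lra. apply Rdiv_le_0_compat; lra.
  - apply Rmult_le_pos. apply Cmod_ge_0. apply pow_le; lra.
  - rewrite <- Rpow_mult_distr. apply Rle_trans with ((2 / c) ^ j).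
    + apply pow_incr. split. apply Rmult_le_pos. apply Rdiv_le_0_compat; lra. lra.
      unfold Rdiv. assert (0 < / c) by (apply Rinv_0_lt_compat; lra). nra.
    + apply Rle_pow; [|lia]. apply (Rmult_le_reg_l c); [lra|].
      unfold Rdiv. rewrite Rmult_1_r, <- Rmult_assoc, (Rmult_comm c 2), Rmult_assoc, Rinv_r by lra. lra.
  - apply Hab; auto.
Qed.

Lemma ftp_ext {X : CBanach} (P Q : X -> Defs.C) :
  finite_type_poly P -> (forall x, P x = Q x) -> finite_type_poly Q.
Proof. intros H E. replace Q with P; auto. apply functional_extensionality; auto. Qed.
Lemma ftp_cmul {X : CBanach} (a : C) (P : X -> Defs.C) :
  finite_type_poly P -> finite_type_poly (fun x => Cmult a (P x)).
Proof. intros H. apply (ftp_mul (fun _ => a) P); auto. apply ftp_const. Qed.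
Lemma ftp_csum {X : CBanach} n (H : nat -> X -> Defs.C) :
  (forall i, (i < n)%nat -> finite_type_poly (H i)) -> finite_type_poly (fun x => csum n (fun i => H i x)).
Proof.
  induction n; intros Hi; simpl.
  - apply ftp_const.
  - apply (ftp_add (fun x => csum n (fun i => H i x)) (H n)); auto.
Qed.

Lemma ftp_comp_affine {X Y : CBanach} (y0 : Y) (L : X -> Y) (P : Y -> Defs.C) :
  Defs.is_linear L -> is_bounded_op L -> finite_type_poly P ->
  finite_type_poly (fun x => P (vadd y0 (L x))).
Proof.
  intros HL HB HP. induction HP.
  - apply ftp_const.
  - apply (ftp_ext (fun x => Cadd (phi y0) (phi (L x)))).
    + apply ftp_add. apply ftp_const. apply ftp_dual. apply dual_comp; auto.
    + intros x. symmetry. apply dual_add; auto.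
  - apply (ftp_add (fun x => p (vadd y0 (L x))) (fun x => q (vadd y0 (L x)))); auto.
  - apply (ftp_mul (fun x => p (vadd y0 (L x))) (fun x => q (vadd y0 (L x)))); auto.
Qed.
Lemma ftp_comp_lin {X Y : CBanach} (L : X -> Y) (P : Y -> Defs.C) :
  Defs.is_linear L -> is_bounded_op L -> finite_type_poly P -> finite_type_poly (fun x => P (L x)).
Proof.
  intros HL HB HP. apply (ftp_ext (fun x => P (vadd vzero (L x)))).
  - apply ftp_comp_affine; auto.
  - intros; rewrite vadd_0l; auto.
Qed.

Lemma ftp_radial_poly {X : CBanach} (P : X -> Defs.C) : finite_type_poly P ->
  exists n, forall x, IsPoly (fun mu => P (vscal mu x)) n.
Proof.
  intros HP. induction HP.
  - exists 1%nat. intros; apply IsPoly_const.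
  - exists 2%nat. intros x. apply (IsPoly_ext (fun mu => Cmult mu (Cmult (phi x) (RtoC 1)))).
    + apply IsPoly_shift. apply IsPoly_scal, IsPoly_const.
    + intros mu. rewrite dual_scal by auto. ring.
  - destruct IHHP1 as [n1 H1], IHHP2 as [n2 H2]. exists (Nat.max n1 n2). intros x.
    apply (IsPoly_add _ _ _ _ (H1 x) (H2 x)).
  - destruct IHHP1 as [n1 H1], IHHP2 as [n2 H2]. exists (n1 + n2)%nat. intros x.
    apply (IsPoly_mul _ _ _ _ (H1 x) (H2 x)).
Qed.

Lemma ftp_ball {Y : CBanach} (P : Y -> Defs.C) : finite_type_poly P ->
  exists Bd L, 0 <= Bd /\ 0 <= L /\ (forall y, inBall y -> Cmod (P y) <= Bd) /\
    (forall y y', inBall y -> inBall y' -> Cmod (Cminus (P y) (P y')) <= L * vnorm (vsub y y')).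
Proof.
  unfold inBall. intros HP. induction HP.
  - exists (Cmod c), 0. split; [apply Cmod_ge_0|]. split; [lra|]. split. intros; lra.
    intros. cnorm. replace (Cminus c c) with (RtoC 0) by ring. rewrite Cmod_0.
    pose proof (vnorm_ge0 _ (vsub y y')). nra.
  - destruct (dual_bound phi H) as [M [HM0 HM]]. exists M, M. repeat split; auto.
    + intros y Hy. eapply Rle_trans. apply HM. pose proof (vnorm_ge0 _ y). nra.
    + intros y y' _ _. rewrite <- dual_sub by auto. apply HM.
  - destruct IHHP1 as [B1 [L1 [? [? [Hb1 Hl1]]]]], IHHP2 as [B2 [L2 [? [? [Hb2 Hl2]]]]].
    exists (B1 + B2), (L1 + L2). repeat split; try lra.
    + intros y Hy. cnorm. eapply Rle_trans. apply Cmod_triangle.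
      pose proof (Hb1 y Hy); pose proof (Hb2 y Hy). lra.
    + intros y y' Hy Hy'. cnorm. eapply Rle_trans. apply Cmod_sub_add.
      pose proof (Hl1 y y' Hy Hy'); pose proof (Hl2 y y' Hy Hy'). cnorm. lra.
  - destruct IHHP1 as [B1 [L1 [? [? [Hb1 Hl1]]]]], IHHP2 as [B2 [L2 [? [? [Hb2 Hl2]]]]].
    exists (B1 * B2), (B1 * L2 + B2 * L1). repeat split; try nra.
    + intros y Hy. cnorm. rewrite Cmod_mult. pose proof (Hb1 y Hy); pose proof (Hb2 y Hy).
      apply Rmult_le_compat; auto using Cmod_ge_0.
    + intros y y' Hy Hy'. cnorm. eapply Rle_trans. apply Cmod_sub_mul.
      pose proof (Hl1 y y' Hy Hy'); pose proof (Hl2 y y' Hy Hy'). cnorm.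
      pose proof (Hb1 y Hy); pose proof (Hb2 y' Hy').
      pose proof (Cmod_ge_0 (p y)); pose proof (Cmod_ge_0 (q y')).
      pose proof (Cmod_ge_0 (Cminus (q y) (q y'))); pose proof (Cmod_ge_0 (Cminus (p y) (p y'))).
      pose proof (vnorm_ge0 _ (vsub y y')).
      assert (Cmod (p y) * Cmod (Cminus (q y) (q y')) <= B1 * (L2 * vnorm (vsub y y')))
        by (apply Rmult_le_compat; auto).
      assert (Cmod (q y') * Cmod (Cminus (p y) (p y')) <= B2 * (L1 * vnorm (vsub y y')))
        by (apply Rmult_le_compat; auto).
      nra.
Qed.

(** [hcoef m Q j]: the [j]-th homogeneous component of [Q], computed as a
    Fourier coefficient of  μ ↦ Q(μ x)  on the unit circle. *)
Definition hcoef {X : CBanach} (m : nat) (Q : X -> Defs.C) (j : nat) (x : X) : C :=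
  DFT m (fun mu => Q (vscal mu x)) j 1.

Lemma ftp_hcoef {X : CBanach} (Q : X -> Defs.C) m j :
  finite_type_poly Q -> finite_type_poly (hcoef m Q j).
Proof.
  intros HQ. unfold hcoef, DFT. apply ftp_cmul.
  apply (ftp_csum m (fun k x => Cmult (Eu (- (INR j * (INR k * (2 * PI / INR m)))))
     (Q (vscal (Cmult (RtoC 1) (Eu (INR k * (2 * PI / INR m)))) x)))).
  intros k _. apply ftp_cmul.
  apply (ftp_comp_lin (fun x => vscal (Cmult (RtoC 1) (Eu (INR k * (2 * PI / INR m)))) x) Q); auto.
  - apply (lin_scal_comp _ (fun x => x)), lin_id.
  - apply (bounded_scal_comp _ (fun x => x)), bounded_id.
Qed.

Lemma ftp_homogeneous_expansion {X : CBanach} (Q : X -> Defs.C) : finite_type_poly Q ->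
  exists nQ, forall m, (nQ < m)%nat ->
    forall x mu, Q (vscal mu x) = csum m (fun j => Cmult (hcoef m Q j x) (Cpow mu j)).
Proof.
  intros HQ. destruct (ftp_radial_poly Q HQ) as [nQ HnQ]. exists nQ. intros m Hm x mu.
  destruct (HnQ x) as [cq Hcq].
  etransitivity; [apply (poly_pad (fun mu => Q (vscal mu x)) cq nQ m); auto; lia|].
  apply csum_ext; intros j Hj.
  unfold hcoef. rewrite (DFT_poly m _ cq nQ j 1) by (auto; lia). rewrite pow1. ring.
Qed.

Lemma A_bounded {Y : CBanach} (f : Y -> Defs.C) : in_A f -> bounded_on_ball f.
Proof.
  intros Hf. destruct (Hf 1 ltac:(lra)) as [P [HP HfP]]. destruct (ftp_ball P HP) as [Bd [L [? [? [Hb _]]]]].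
  exists (1 + Bd). intros y Hy. specialize (HfP y Hy). specialize (Hb y Hy). cnorm.
  replace (f y) with (Cplus (Cminus (f y) (P y)) (P y)) by ring.
  eapply Rle_trans. apply Cmod_triangle. lra.
Qed.

Lemma A_unif_cont {Y : CBanach} (f : Y -> Defs.C) : in_A f -> unif_cont_on_ball f.
Proof.
  intros Hf eps Heps. destruct (Hf (eps / 3) ltac:(lra)) as [P [HP HfP]].
  destruct (ftp_ball P HP) as [Bd [L [? [? [_ Hl]]]]].
  exists (eps / 3 / (L + 1)). split. apply Rdiv_lt_0_compat; lra.
  intros x y Hx Hy Hxy. pose proof (HfP x Hx). pose proof (HfP y Hy). pose proof (Hl x y Hx Hy). cnorm.
  replace (Cminus (f x) (f y)) with
    (Cplus (Cminus (f x) (P x)) (Cplus (Cminus (P x) (P y)) (Copp (Cminus (f y) (P y))))) by ring.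
  eapply Rle_lt_trans. apply Cmod_triangle. eapply Rle_lt_trans. apply Rplus_le_compat_l. apply Cmod_triangle.
  rewrite Cmod_opp.
  assert (L * vnorm (vsub x y) <= L * (eps / 3 / (L + 1))) by (apply Rmult_le_compat_l; lra).
  assert (L * (eps / 3 / (L + 1)) < eps / 3).
  { apply (Rmult_lt_reg_r (L + 1)). lra.
    replace (L * (eps / 3 / (L + 1)) * (L + 1)) with (L * (eps / 3)) by (field; lra). nra. }
  lra.
Qed.

Lemma A_comp_affine {X Y : CBanach} (f : Y -> Defs.C) (y0 : Y) (L : X -> Y) :
  Defs.is_linear L -> is_bounded_op L -> (forall x, inBall x -> inBall (vadd y0 (L x))) ->
  in_A f -> in_A (fun x => f (vadd y0 (L x))).
Proof.
  intros HL HB Hball Hf eps Heps. destruct (Hf eps Heps) as [P [HP HfP]].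
  exists (fun x => P (vadd y0 (L x))). split.
  - apply ftp_comp_affine; auto.
  - intros x Hx. apply HfP, Hball, Hx.
Qed.

Lemma Au_comp_lin {X Y : CBanach} (f : Y -> Defs.C) (L : X -> Y) :
  Defs.is_linear L -> (forall x, vnorm (L x) <= vnorm x) -> in_Au f -> in_Au (fun x => f (L x)).
Proof.
  intros HL Hn [[B HB] [Hh Hu]]. unfold inBall in *.
  split; [|split].
  - exists B. intros x Hx. apply HB. unfold inBall in *. pose proof (Hn x). lra.
  - intros x Hx. destruct (Hh (L x)) as [Lf [HLf Hest]]. { unfold inBall in *. pose proof (Hn x); lra. }
    exists (fun h => Lf (L h)). split.
    + apply dual_comp; auto. exists 1. intros; rewrite Rmult_1_l; auto.
    + intros eps Heps. destruct (Hest eps Heps) as [d [Hd Hd2]]. exists d. split; auto.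
      intros h Hh'. rewrite (proj1 HL). eapply Rle_trans. apply Hd2. pose proof (Hn h); lra.
      apply Rmult_le_compat_l; auto; lra.
  - intros eps Heps. destruct (Hu eps Heps) as [d [Hd Hd2]]. exists d. split; auto.
    intros x y Hx Hy Hxy. apply Hd2; unfold inBall in *; try (pose proof (Hn x); pose proof (Hn y); lra).
    rewrite <- lin_sub by auto. pose proof (Hn (vsub x y)). lra.
Qed.

(** ** The Hahn–Banach theorem *)

Lemma zorn_prop (T : Type) (t0 : T) (R : T -> T -> Prop) :
  (forall t, R t t) -> (forall r s t, R r s -> R s t -> R r t) ->
  (forall A : T -> Prop, (forall s t, A s -> A t -> R s t \/ R t s) ->
     exists t, forall s, A s -> R s t) ->
  exists t, forall s, R t s -> R s t.
Proof.
  intros Hr Ht Hc.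
  destruct (@classical_sets.ZL_preorder T t0 (fun a b => boolp.asbool (R a b))) as [t Hm].
  - intros t. apply boolp.asboolT. auto.
  - intros r s t H1 H2. apply boolp.asboolT. apply boolp.asboolW in H1. apply boolp.asboolW in H2. eauto.
  - intros A HA. destruct (Hc A) as [t Ht'].
    + intros s t As At. destruct (HA s t As At) as [h|h]; apply boolp.asboolW in h; auto.
    + exists t. intros s As. apply boolp.asboolT; auto.
  - exists t. intros s Hs. apply boolp.asboolW. apply Hm. apply boolp.asboolT; auto.
Qed.

Section RealHahnBanach.
Variable X : CBanach.

Definition rs (t : R) (x : X) : X := vscal (RtoC t) x.

Lemma rs_adds a b x : rs (a + b) x = vadd (rs a x) (rs b x).
Proof. unfold rs. rewrite RtoC_plus. apply vscal_addC. Qed.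
Lemma rs_addv a x y : rs a (vadd x y) = vadd (rs a x) (rs a y).
Proof. apply vscal_distr_v. Qed.
Lemma rs_assoc a b x : rs a (rs b x) = rs (a * b) x.
Proof. unfold rs. rewrite vscal_assocC, RtoC_mult; auto. Qed.
Lemma rs_1 x : rs 1 x = x.
Proof. apply vscal_1C. Qed.
Lemma rs_0 x : rs 0 x = vzero.
Proof. apply vscal_0. Qed.
Lemma rs_norm a x : vnorm (rs a x) = Rabs a * vnorm x.
Proof. apply vnorm_scalR. Qed.
Lemma rs_m1 x : rs (-1) x = vopp x.
Proof. apply vscal_m1. Qed.

Variable x1 : X.
Hypothesis Hx1 : x1 <> vzero.

(** A partial real-linear functional dominated by the norm and equal to
    [‖x1‖] at [x1], given by its graph [G]. *)
Definition good (G : X -> R -> Prop) :=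
  (forall x s y t, G x s -> G y t -> G (vadd x y) (s + t)) /\
  (forall a x s, G x s -> G (rs a x) (a * s)) /\
  (forall x s t, G x s -> G x t -> s = t) /\
  (forall x s, G x s -> s <= vnorm x) /\
  G x1 (vnorm x1).

Lemma good_zero G : good G -> G vzero 0.
Proof.
  intros [_ [Hs [_ [_ H1]]]]. pose proof (Hs 0 _ _ H1) as H. rewrite rs_0, Rmult_0_l in H. auto.
Qed.

Definition G0 (x : X) (s : R) := exists a, x = rs a x1 /\ s = a * vnorm x1.

Lemma G0_good : good G0.
Proof.
  pose proof (vnorm_pos _ _ Hx1) as Hp.
  split; [|split; [|split; [|split]]].
  - intros x s y t [a [-> ->]] [b [-> ->]]. exists (a + b). rewrite rs_adds. split; auto; ring.
  - intros c x s [a [-> ->]]. exists (c * a). rewrite rs_assoc. split; auto; ring.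
  - intros x s t [a [-> ->]] [b [E ->]].
    assert (H : vnorm (rs (a - b) x1) = 0).
    { replace (a - b) with (a + -1 * b) by ring.
      rewrite rs_adds, <- rs_assoc, rs_m1, <- E, vadd_oppr. apply vnorm_zero. }
    rewrite rs_norm in H. assert (a - b = 0).
    { destruct (Req_dec (a - b) 0); auto.
      assert (0 < Rabs (a - b)) by (apply Rabs_pos_lt; auto). nra. }
    replace b with a by lra. auto.
  - intros x s [a [-> ->]]. rewrite rs_norm. pose proof (Rle_abs a). nra.
  - exists 1. rewrite rs_1. split; auto; ring.
Qed.

Definition GT := { G : X -> R -> Prop | good G }.
Definition Rle_G (A B : GT) := forall x s, proj1_sig A x s -> proj1_sig B x s.

Lemma chain_ub (Ac : GT -> Prop) : (forall s t, Ac s -> Ac t -> Rle_G s t \/ Rle_G t s) ->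
  exists t, forall s, Ac s -> Rle_G s t.
Proof.
  intros Htot. destruct (classic (exists G, Ac G)) as [[G1 HG1]|Hne].
  - set (U := fun x s => exists G, Ac G /\ proj1_sig G x s).
    assert (HU : good U).
    { split; [|split; [|split; [|split]]].
      - intros x s y t [Ga [Ha Hxa]] [Gb [Hb Hyb]]. destruct (Htot Ga Gb Ha Hb) as [h|h].
        + exists Gb. split; auto. apply (proj1 (proj2_sig Gb)); auto.
        + exists Ga. split; auto. apply (proj1 (proj2_sig Ga)); auto.
      - intros a x s [Ga [Ha Hxa]]. exists Ga. split; auto. apply (proj1 (proj2 (proj2_sig Ga))); auto.
      - intros x s t [Ga [Ha Hxa]] [Gb [Hb Hyb]]. destruct (Htot Ga Gb Ha Hb) as [h|h].
        + apply (proj1 (proj2 (proj2 (proj2_sig Gb))) x); auto.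
        + apply (proj1 (proj2 (proj2 (proj2_sig Ga))) x); auto.
      - intros x s [Ga [Ha Hxa]]. apply (proj1 (proj2 (proj2 (proj2 (proj2_sig Ga))))); auto.
      - exists G1. split; auto. apply (proj2 (proj2 (proj2 (proj2 (proj2_sig G1))))). }
    exists (exist _ U HU). intros s Hs x t Hxt. simpl. exists s; auto.
  - exists (exist _ G0 G0_good). intros s Hs. exfalso; apply Hne; eauto.
Qed.

(** The classical one-dimensional extension step: a value [c] for the new
    direction [x] compatible with domination, found as a supremum. *)
Lemma extension_constant (M : X -> R -> Prop) (x : X) : good M ->
  exists c, (forall v s, M v s -> s - vnorm (vsub v x) <= c) /\
            (forall w t, M w t -> c <= vnorm (vadd w x) - t).
Proof.
  intros HM. pose proof (good_zero M HM) as M00. destruct HM as [Hadd [_ [_ [Hdom _]]]].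
  set (Lset := fun r => exists v s, M v s /\ r = s - vnorm (vsub v x)).
  assert (Hle : forall v s w t, M v s -> M w t -> s - vnorm (vsub v x) <= vnorm (vadd w x) - t).
  { intros v s w t Hv Hw. pose proof (Hdom _ _ (Hadd _ _ _ _ Hv Hw)).
    pose proof (vnorm_triangle _ (vsub v x) (vadd w x)) as Ht.
    replace (vadd (vsub v x) (vadd w x)) with (vadd v w) in Ht.
    - lra.
    - unfold vsub. rewrite vadd_4, vadd_oppl, vadd_0r. reflexivity. }
  destruct (completeness Lset) as [c [Hub Hlub]].
  - exists (vnorm (vadd vzero x) - 0). intros r [v [s [Hv ->]]]. apply Hle; auto.
  - exists (0 - vnorm (vsub vzero x)). exists vzero, 0. auto.
  - exists c. split.
    + intros v s Hv. apply Hub. exists v, s; auto.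
    + intros w t Hw. apply Hlub. intros r [v [s [Hv ->]]]. apply Hle; auto.
Qed.

Lemma extension_dominated (M : X -> R -> Prop) (x : X) c : good M ->
  (forall v s, M v s -> s - vnorm (vsub v x) <= c) ->
  (forall w t, M w t -> c <= vnorm (vadd w x) - t) ->
  forall u s a, M u s -> s + a * c <= vnorm (vadd u (rs a x)).
Proof.
  intros [_ [Hsc [_ [Hdom _]]]] Hc1 Hc2 u s a Hu.
  destruct (Rtotal_order a 0) as [Hneg|[Hz|Hpos]].
  - (* divide by b = -a > 0 and use the lower bound at u/b *)
    set (b := - a). assert (0 < b) by (unfold b; lra).
    pose proof (Hc1 (rs (/ b) u) (/ b * s) (Hsc _ _ _ Hu)) as Hc.
    assert (E : vnorm (vsub (rs (/ b) u) x) * b = vnorm (vadd u (rs a x))).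
    { rewrite Rmult_comm. rewrite <- (Rabs_right b) at 1 by lra. rewrite <- rs_norm. f_equal.
      unfold vsub. rewrite rs_addv, rs_assoc, Rinv_r, rs_1 by lra. f_equal.
      rewrite <- rs_m1, rs_assoc. f_equal. unfold b; ring. }
    apply (Rmult_le_compat_r b) in Hc; [|lra].
    replace ((/ b * s - vnorm (vsub (rs (/ b) u) x)) * b) with (s - vnorm (vsub (rs (/ b) u) x) * b) in Hc
      by (field; lra).
    rewrite E in Hc. unfold b in Hc. nra.
  - subst. rewrite rs_0, vadd_0r, Rmult_0_l, Rplus_0_r. auto.
  - (* divide by a > 0 and use the upper bound at u/a *)
    pose proof (Hc2 (rs (/ a) u) (/ a * s) (Hsc _ _ _ Hu)) as Hc.
    assert (E : vnorm (vadd (rs (/ a) u) x) * a = vnorm (vadd u (rs a x))).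
    { rewrite Rmult_comm. rewrite <- (Rabs_right a) at 1 by lra. rewrite <- rs_norm. f_equal.
      rewrite rs_addv, rs_assoc, Rinv_r, rs_1 by lra. reflexivity. }
    apply (Rmult_le_compat_r a) in Hc; [|lra].
    replace ((vnorm (vadd (rs (/ a) u) x) - / a * s) * a) with (vnorm (vadd (rs (/ a) u) x) * a - s) in Hc
      by (field; lra).
    rewrite E in Hc. lra.
Qed.

Lemma extend (M : X -> R -> Prop) (x : X) : good M -> (forall s, ~ M x s) ->
  exists c, good (fun z t => exists u s a, M u s /\ z = vadd u (rs a x) /\ t = s + a * c).
Proof.
  intros HM Hx. destruct (extension_constant M x HM) as [c [Hc1 Hc2]].
  pose proof (extension_dominated M x c HM Hc1 Hc2) as Hdom'.
  destruct HM as [Hadd [Hsc [Hfun [Hdom H1]]]].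
  exists c. split; [|split; [|split; [|split]]].
  - intros z1 t1 z2 t2 [u1 [s1 [a1 [H1u [-> ->]]]]] [u2 [s2 [a2 [H2u [-> ->]]]]].
    exists (vadd u1 u2), (s1 + s2), (a1 + a2). split; auto. split. rewrite rs_adds. apply vadd_4. ring.
  - intros b z t [u [s [a [Hu [-> ->]]]]]. exists (rs b u), (b * s), (b * a). split; auto. split.
    rewrite rs_addv, rs_assoc; auto. ring.
  - (* well defined: x is not in the domain of M *)
    intros z t1 t2 [u1 [s1 [a1 [H1u [-> ->]]]]] [u2 [s2 [a2 [H2u [E ->]]]]].
    destruct (Req_dec a1 a2) as [Ea|Na].
    + subst a2. assert (u1 = u2).
      { apply (f_equal (fun z => vadd z (vopp (rs a1 x)))) in E.
        rewrite <- !vadd_assoc, !vadd_oppr, !vadd_0r in E. auto. }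
      subst. rewrite (Hfun _ _ _ H1u H2u). auto.
    + exfalso. apply (Hx ((/ (a1 - a2)) * (s2 + (-1) * s1))).
      replace x with (rs (/ (a1 - a2)) (vadd u2 (rs (-1) u1))).
      { apply Hsc, Hadd; auto. }
      assert (H : vadd u2 (rs (-1) u1) = rs (a1 - a2) x).
      { rewrite rs_m1. apply vadd_swap in E. rewrite E.
        replace (a1 - a2) with (a1 + -1 * a2) by ring. rewrite rs_adds, <- rs_assoc, rs_m1. auto. }
      rewrite H, rs_assoc, Rinv_l, rs_1; auto. lra.
  - intros z t [u [s [a [Hu [-> ->]]]]]. apply Hdom'; auto.
  - exists x1, (vnorm x1), 0. split; auto. split. rewrite rs_0, vadd_0r; auto. ring.
Qed.

Lemma real_HB : exists u : X -> R,
  (forall x y, u (vadd x y) = u x + u y) /\ (forall a x, u (rs a x) = a * u x) /\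
  (forall x, u x <= vnorm x) /\ u x1 = vnorm x1.
Proof.
  destruct (zorn_prop GT (exist _ G0 G0_good) Rle_G) as [[M HM] Hmax].
  - intros t x s; auto.
  - intros r s t H1 H2 x v H; auto.
  - apply chain_ub.
  - (* a maximal good graph is total *)
    assert (Htot : forall x, exists s, M x s).
    { intros x. apply NNPP. intro Hn. assert (Hx : forall s, ~ M x s) by (intros s Hs; apply Hn; eauto).
      destruct (extend M x HM Hx) as [c Hc].
      specialize (Hmax (exist _ _ Hc)). simpl in Hmax.
      assert (Hle : Rle_G (exist _ M HM) (exist _ _ Hc)).
      { intros z t Hz. simpl in *. exists z, t, 0. split; auto. split. rewrite rs_0, vadd_0r; auto. ring. }
      specialize (Hmax Hle x c). simpl in Hmax. apply (Hx c). apply Hmax.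
      exists vzero, 0, 1. split. apply good_zero; auto. split. rewrite rs_1, vadd_0l; auto. ring. }
    set (u := fun x => proj1_sig (constructive_indefinite_description _ (Htot x))).
    assert (Hu : forall x, M x (u x)) by (intros x; unfold u; destruct constructive_indefinite_description; auto).
    destruct HM as [Hadd [Hsc [Hfun [Hdom H1]]]].
    exists u. split; [|split; [|split]].
    + intros x y. apply (Hfun (vadd x y)); auto.
    + intros a x. apply (Hfun (rs a x)); auto.
    + intros x; auto.
    + apply (Hfun x1); auto.
Qed.
End RealHahnBanach.

(** A real-linear functional [u] dominated by the norm is the real part of the
    complex-linear functional  x ↦ u(x) - i·u(i x),  which has norm <= 1. *)
Lemma complexify (X : CBanach) (u : X -> R) :
  (forall x y, u (vadd x y) = u x + u y) -> (forall a x, u (rs X a x) = a * u x) ->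
  (forall x, u x <= vnorm x) ->
  let phi := fun x : X => (u x, - u (vscal Ci x)) : C in
  in_dual phi /\ (forall x, Cmod (phi x) <= vnorm x).
Proof.
  intros Ua Us Ub phi.
  assert (Udec : forall p q x, u (vscal (p, q) x) = p * u x + q * u (vscal Ci x)).
  { intros p q x.
    replace (p, q) with (Cplus (RtoC p) (Cmult (RtoC q) Ci)) by (apply injective_projections; simpl; ring).
    rewrite vscal_addC, <- vscal_assocC, Ua. unfold rs in Us. rewrite !Us. reflexivity. }
  assert (Hlin : forall a x, phi (vscal a x) = Cmult a (phi x)).
  { intros [p q] x. unfold phi. rewrite Udec, vscal_assocC.
    replace (Cmult Ci (p, q)) with ((-q, p) : C) by (apply injective_projections; simpl; ring).
    rewrite Udec. apply injective_projections; simpl; ring. }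
  assert (Hadd : forall x y, phi (vadd x y) = Cplus (phi x) (phi y)).
  { intros x y. unfold phi. rewrite vscal_distr_v, !Ua. apply injective_projections; simpl; ring. }
  assert (Hbd : forall x, Cmod (phi x) <= vnorm x).
  { (* rotate x by the unimodular w with  w·phi(x) = |phi(x)|  and use  Re phi = u *)
    intros x. destruct (classic (phi x = RtoC 0)) as [Z|NZ].
    - rewrite Z, Cmod_0. apply vnorm_ge0.
    - assert (Hm : 0 < Cmod (phi x)).
      { destruct (Cmod_ge_0 (phi x)) as [h|h]; auto. symmetry in h. apply Cmod_eq_0 in h. contradiction. }
      set (w := Cmult (Cconj (phi x)) (RtoC (/ Cmod (phi x)))).
      assert (Hw : Cmult w (phi x) = RtoC (Cmod (phi x))).
      { unfold w. replace (Cmult (Cmult (Cconj (phi x)) (RtoC (/ Cmod (phi x)))) (phi x)) with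
          (Cmult (Cmult (phi x) (Cconj (phi x))) (RtoC (/ Cmod (phi x)))) by ring.
        rewrite <- Cmod2_conj. apply injective_projections; simpl; field; lra. }
      assert (Hwm : Cmod w = 1).
      { unfold w. rewrite Cmod_mult, Cmod_conj, Cmod_R, Rabs_right.
        field; lra. left; apply Rinv_0_lt_compat; auto. }
      pose proof (Ub (vscal w x)) as H. rewrite vnorm_scal in H. cnorm. rewrite Hwm, Rmult_1_l in H.
      change (u (vscal w x)) with (fst (phi (vscal w x))) in H. rewrite Hlin, Hw in H. exact H. }
  split; auto. split; [|split].
  - intros; cnorm; apply Hadd.
  - intros; cnorm; apply Hlin.
  - exists 1. intros x. cnorm. rewrite Rmult_1_l. apply Hbd.
Qed.

Definition norming_pair {X : CBanach} (phi : X -> Defs.C) (x0 : X) : Prop :=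
  in_dual phi /\ phi x0 = Defs.C1 /\ vnorm x0 <= 1 /\ forall x, Cmod (phi x) <= vnorm x.

Lemma norming_pair_exists (X : CBanach) (x1 : X) : x1 <> vzero ->
  exists (phi : X -> Defs.C) (x0 : X), norming_pair phi x0.
Proof.
  intros Hx1. destruct (real_HB X x1 Hx1) as [u [Ua [Us [Ub U1]]]].
  destruct (complexify X u Ua Us Ub) as [Hdual Hbd]. set (phi := fun x => _) in Hdual, Hbd.
  assert (Hp1 : vnorm x1 <= Cmod (phi x1)).
  { pose proof (re_le_Cmod (phi x1)) as H. unfold Re, phi in H. simpl in H.
    rewrite Rabs_right in H; [rewrite <- U1; exact H|]. rewrite U1. apply Rle_ge, vnorm_ge0. }
  pose proof (vnorm_pos _ _ Hx1) as Hpos.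
  assert (NZ : phi x1 <> RtoC 0) by (intro E; rewrite E, Cmod_0 in Hp1; lra).
  exists phi, (vscal (Cinv (phi x1)) x1). split; auto. split; [|split]; auto.
  - rewrite dual_scal by auto. cnorm. apply Cinv_l; auto.
  - rewrite vnorm_scal. cnorm. rewrite Cmod_inv by auto.
    apply (Rmult_le_reg_l (Cmod (phi x1))). lra. rewrite <- Rmult_assoc, Rinv_r by lra. lra.
Qed.

(** ** A(B_Y) ⊂ A_u(B_Y) *)

Lemma frechet_transfer {X Y : CBanach} (f : Y -> Defs.C) (y0 : Y) (A : X -> Y) (B : Y -> X)
  (L0 : X -> Defs.C) :
  Defs.is_linear A -> Defs.is_linear B -> is_bounded_op B -> (forall h, A (B h) = h) ->
  in_dual L0 ->
  (forall eps, 0 < eps -> exists d, 0 < d /\ forall x, vnorm x < d ->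
     Cmod (Cminus (Cminus (f (vadd y0 (A (vadd vzero x)))) (f (vadd y0 (A vzero)))) (L0 x))
       <= eps * vnorm x) ->
  in_dual (fun h => L0 (B h)) /\
  forall eps, 0 < eps -> exists d, 0 < d /\ forall h, vnorm h < d ->
    Cmod (Cminus (Cminus (f (vadd y0 h)) (f y0)) (L0 (B h))) <= eps * vnorm h.
Proof.
  intros HA HB HBb AB HL0 Hest. split; [apply dual_comp; auto|].
  destruct (bounded_ge1 B HBb) as [K [HK HBK]].
  intros eps Heps. destruct (Hest (eps / K)) as [d0 [Hd0 Hd0']]. { apply Rdiv_lt_0_compat; lra. }
  exists (d0 / K). split. { apply Rdiv_lt_0_compat; lra. }
  intros h Hh. pose proof (HBK h) as HBh. pose proof (vnorm_ge0 _ (B h)).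
  assert (HBd : vnorm (B h) < d0).
  { apply Rle_lt_trans with (K * vnorm h); auto.
    apply (Rmult_lt_reg_r (/ K)). apply Rinv_0_lt_compat; lra.
    replace (K * vnorm h * / K) with (vnorm h) by (field; lra). exact Hh. }
  specialize (Hd0' (B h) HBd). rewrite vadd_0l, AB, (lin_zero A), vadd_0r in Hd0' by auto.
  eapply Rle_trans; [exact Hd0'|].
  replace (eps * vnorm h) with (eps / K * (K * vnorm h)) by (field; lra).
  apply Rmult_le_compat_l; auto. left; apply Rdiv_lt_0_compat; lra.
Qed.

Section AIncluded.
Variables X Y : CBanach.
Hypothesis HX : Au_eq_A X.
Variables (T : Y -> X) (S : X -> Y).
Hypotheses (HlT : Defs.is_linear T) (HbT : is_bounded_op T)
           (HlS : Defs.is_linear S) (HbS : is_bounded_op S) (ST : forall y, S (T y) = y).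

(** Holomorphy at [y0]: the function  x ↦ f(y0 + c·S x)  is in A(B_X) for
    small [c > 0], hence holomorphic at [0], and [frechet_transfer] applies. *)
Lemma A_holomorphic (f : Y -> Defs.C) : in_A f -> holomorphic_on_ball f.
Proof.
  intros Hf y0 Hy0. unfold inBall in Hy0.
  set (d := (1 - vnorm y0) / 2). assert (Hd : 0 < d) by (unfold d; lra).
  destruct (bounded_ge1 S HbS) as [KS [HKS HS]].
  set (c := d / KS). assert (Hc : 0 < c) by (unfold c; apply Rdiv_lt_0_compat; lra).
  set (A := fun x => vscal (RtoC c) (S x)).
  assert (HA : Defs.is_linear A) by (apply lin_scal_comp; auto).
  assert (HgA : in_A (fun x => f (vadd y0 (A x)))).
  { apply A_comp_affine; auto. { apply bounded_scal_comp; auto. }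
    intros x Hx. unfold inBall in *. eapply Rle_lt_trans. apply vnorm_triangle.
    unfold A. rewrite vnorm_scalR, Rabs_right by lra. pose proof (HS x). pose proof (vnorm_ge0 _ x).
    assert (c * vnorm (S x) <= c * (KS * vnorm x)) by (apply Rmult_le_compat_l; lra).
    assert (c * (KS * vnorm x) < d).
    { unfold c. replace (d / KS * (KS * vnorm x)) with (d * vnorm x) by (field; lra). nra. }
    unfold d in *. lra. }
  apply HX in HgA. destruct HgA as [_ [Hgh _]].
  destruct (Hgh vzero) as [L0 [HL0 Hest]]. { unfold inBall; rewrite vnorm_zero; lra. }
  exists (fun h => L0 (vscal (RtoC (/ c)) (T h))).
  apply (frechet_transfer f y0 A (fun h => vscal (RtoC (/ c)) (T h)) L0); auto.
  - apply lin_scal_comp; auto.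
  - apply bounded_scal_comp; auto.
  - intros h. unfold A. rewrite (proj2 HlS), ST, vscal_assocC.
    replace (Cmult (RtoC c) (RtoC (/ c))) with (RtoC 1) by (apply injective_projections; simpl; field; lra).
    apply vscal_1C.
Qed.

Lemma A_to_Au (f : Y -> Defs.C) : in_A f -> in_Au f.
Proof. intros Hf. split; [|split]; auto using A_bounded, A_holomorphic, A_unif_cont. Qed.
End AIncluded.

(** ** A_u(B_Y) ⊂ A(B_Y) *)
Section AuIncluded.
Variables X Y : CBanach.
Hypothesis HX : Au_eq_A X.
Variables (T : Y -> X) (S : X -> Y).
Hypotheses (HlT : Defs.is_linear T) (HbT : is_bounded_op T) (HlS : Defs.is_linear S)
           (ST : forall y, S (T y) = y).
Variables (KS KT : R).
Hypotheses (HKS : 1 <= KS) (HKT : 1 <= KT) (HT : forall y, vnorm (T y) <= KT * vnorm y).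
Variables (phi : X -> Defs.C) (x0 : X).
Hypothesis Hphi : norming_pair phi x0.

(** Indeed  x ↦ f(phi(x) y)  lies in A_u(B_X) = A(B_X), and its approximants
    restricted to the line  C·x0  are polynomials in μ. *)
Lemma radial_poly_approx (f : Y -> Defs.C) : in_Au f ->
  forall y, inBall y -> forall eta, 0 < eta -> forall N : nat,
  exists n e, (N <= n)%nat /\ forall mu, Cmod mu < 1 ->
    Cmod (Cminus (f (vscal mu y)) (csum n (fun i => Cmult (e i) (Cpow mu i)))) < eta.
Proof.
  intros Hf y Hy eta Heta N. destruct Hphi as [Hdual [Hx0 [Hx0n Hphib]]]. unfold inBall in Hy.
  assert (HgAu : in_Au (fun x => f (vscal (phi x) y))).
  { apply (Au_comp_lin f (fun x => vscal (phi x) y)); auto.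
    - split.
      + intros a b. rewrite dual_add by auto. apply vscal_addC.
      + intros a x. rewrite dual_scal by auto. rewrite vscal_assocC; auto.
    - intros x. rewrite vnorm_scal. cnorm. pose proof (Hphib x). pose proof (vnorm_ge0 _ y).
      pose proof (Cmod_ge_0 (phi x)). nra. }
  destruct (proj1 (HX _) HgAu eta Heta) as [Py [HPy HPyg]].
  destruct (ftp_radial_poly Py HPy) as [np Hnp].
  destruct (IsPoly_mono _ _ (Nat.max np N) (Hnp x0) ltac:(lia)) as [e He].
  exists (Nat.max np N), e. split; [lia|]. intros mu Hmu.
  specialize (HPyg _ (inBall_scal _ mu x0 Hmu Hx0n)). cbv beta in HPyg.
  rewrite (dual_scal phi mu x0 Hdual), Hx0 in HPyg. rewrite <- He. cnorm. rewrite Cmult_1_r in HPyg. exact HPyg.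
Qed.

Definition approximant (Q : X -> Defs.C) (m N : nat) (r : R) (y : Y) : C :=
  csum N (fun j => Cmult (RtoC ((r / / (KS * KT)) ^ j)) (hcoef m Q j (vscal (RtoC (/ KT)) (T y)))).

Lemma ftp_approximant (Q : X -> Defs.C) m N r :
  finite_type_poly Q -> finite_type_poly (approximant Q m N r).
Proof.
  intros HQ. unfold approximant.
  apply (ftp_csum N (fun j y => Cmult _ (hcoef m Q j (vscal (RtoC (/ KT)) (T y))))).
  intros j _. apply ftp_cmul.
  apply (ftp_comp_lin (fun y => vscal (RtoC (/ KT)) (T y)) (hcoef m Q j)).
  - apply lin_scal_comp; auto.
  - apply bounded_scal_comp; auto.
  - apply ftp_hcoef; auto.
Qed.

(** Let [Q] approximate  h = f(S·/KS)  within
    [η] on [B_X] and let [p] approximate  μ ↦ f(μ y)  within [η] on the disc.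
    Since  f(cμ y) = h(μ w)  for  c = 1/(KS·KT)  and  w = T y/KT,  the
    polynomials  p(c·)  and  Q(· w)  are [2η]-close on the circle of radius
    1/2, so their coefficients are close by [coeff_compare]. *)
Lemma coeffs_close (f : Y -> Defs.C) (Q : X -> Defs.C) (m : nat) (eta : R) (y : Y)
  (e : nat -> C) (n : nat) :
  (forall x, inBall x -> Cmod (Cminus (f (vscal (RtoC (/ KS)) (S x))) (Q x)) < eta) ->
  (forall x mu, Q (vscal mu x) = csum m (fun j => Cmult (hcoef m Q j x) (Cpow mu j))) ->
  inBall y ->
  (forall mu, Cmod mu < 1 ->
     Cmod (Cminus (f (vscal mu y)) (csum n (fun i => Cmult (e i) (Cpow mu i)))) < eta) ->
  forall j, (j < n)%nat -> (j < m)%nat ->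
  Cmod (Cminus (Cmult (e j) (RtoC ((/ (KS * KT)) ^ j))) (hcoef m Q j (vscal (RtoC (/ KT)) (T y))))
    * (1 / 2) ^ j <= 2 * eta.
Proof.
  intros HQ Hexp Hy Hp j Hjn Hjm.
  set (c := / (KS * KT)). set (w := vscal (RtoC (/ KT)) (T y)).
  set (p := fun mu => csum n (fun i => Cmult (e i) (Cpow mu i))).
  change (forall mu, Cmod mu < 1 -> Cmod (Cminus (f (vscal mu y)) (p mu)) < eta) in Hp.
  assert (Hc : 0 < c <= 1).
  { unfold c. split. apply Rinv_0_lt_compat; nra. rewrite <- Rinv_1. apply Rinv_le_contravar; nra. }
  assert (Hw : vnorm w <= 1).
  { unfold w. rewrite vnorm_scalR, Rabs_right by (left; apply Rinv_0_lt_compat; lra).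
    apply (Rmult_le_reg_l KT). lra. rewrite <- Rmult_assoc, Rinv_r, Rmult_1_l by lra.
    pose proof (HT y). unfold inBall in Hy. nra. }
  apply (coeff_compare (fun i => Cmult (e i) (RtoC (c ^ i))) (fun j => hcoef m Q j w) n m
           (fun mu => p (Cmult (RtoC c) mu)) (fun mu => Q (vscal mu w))); auto.
  - lra.
  - intros mu. unfold p. apply csum_ext; intros. rewrite Cpow_mult, Cpow_RtoC. ring.
  - intros mu Hmu.
    assert (Hcm : Cmod (Cmult (RtoC c) mu) < 1).
    { rewrite Cmod_mult, Cmod_R, Rabs_right, Hmu by lra. nra. }
    assert (E : f (vscal (Cmult (RtoC c) mu) y) = f (vscal (RtoC (/ KS)) (S (vscal mu w)))).
    { unfold w. rewrite !(proj2 HlS), ST, !vscal_assocC. f_equal. f_equal.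
      unfold c. destruct mu as [a b]. apply injective_projections; simpl; field; lra. }
    pose proof (Hp _ Hcm) as H1. pose proof (HQ _ (inBall_scal _ mu w ltac:(lra) Hw)) as H2.
    rewrite E in H1. cnorm.
    replace (Cminus (p (Cmult (RtoC c) mu)) (Q (vscal mu w))) with
      (Cplus (Copp (Cminus (f (vscal (RtoC (/ KS)) (S (vscal mu w)))) (p (Cmult (RtoC c) mu))))
             (Cminus (f (vscal (RtoC (/ KS)) (S (vscal mu w)))) (Q (vscal mu w)))) by ring.
    eapply Rle_trans. apply Cmod_triangle. rewrite Cmod_opp. lra.
Qed.

(** The main estimate: for [y ∈ B_Y], compare  f(r y)  with the approximant
    through a polynomial [p] approximating  μ ↦ f(μ y).  The tail of [p] beyond
    degree [N] is small by the Cauchy estimates on the circle of radius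
    ρ = (1+r)/2, and its first [N] coefficients are controlled by
    [coeffs_close]. *)
Lemma pointwise_error (f : Y -> Defs.C) (B1 : R) (Q : X -> Defs.C) (m N : nat) (r eta : R) :
  in_Au f -> (forall y, inBall y -> Cmod (f y) <= B1) -> 0 < eta ->
  (forall x, inBall x -> Cmod (Cminus (f (vscal (RtoC (/ KS)) (S x))) (Q x)) < eta) ->
  (forall x mu, Q (vscal mu x) = csum m (fun j => Cmult (hcoef m Q j x) (Cpow mu j))) ->
  (N <= m)%nat -> 1 / 2 <= r < 1 ->
  forall y, inBall y ->
  Cmod (Cminus (f (vscal (RtoC r) y)) (approximant Q m N r y)) <=
    eta + (B1 + eta) * ((r / ((1 + r) / 2)) ^ N / (1 - r / ((1 + r) / 2)))
        + INR N * ((2 / / (KS * KT)) ^ N * (2 * eta)).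
Proof.
  intros Hf HB Heta HQ Hexp HNm Hr y Hy.
  set (c := / (KS * KT)). set (rho := (1 + r) / 2).
  assert (Hc : 0 < c <= 1).
  { unfold c. split. apply Rinv_0_lt_compat; nra. rewrite <- Rinv_1. apply Rinv_le_contravar; nra. }
  destruct (radial_poly_approx f Hf y Hy eta Heta N) as [n [e [HNn Hp]]].
  pose proof (coeffs_close f Q m eta y e n HQ Hexp Hy Hp) as Hcoef.
  set (p := fun mu => csum n (fun i => Cmult (e i) (Cpow mu i))).
  change (forall mu, Cmod mu < 1 -> Cmod (Cminus (f (vscal mu y)) (p mu)) < eta) in Hp.
  set (w := vscal (RtoC (/ KT)) (T y)) in Hcoef.
  assert (Htail : Cmod (Cminus (p (RtoC r)) (csum N (fun i => Cmult (e i) (Cpow (RtoC r) i)))) <=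
                  (B1 + eta) * ((r / rho) ^ N / (1 - r / rho))).
  { apply (poly_tail e n N p); auto. { unfold rho; lra. }
    intros mu Hmu. assert (H1 : Cmod mu < 1) by (rewrite Hmu; unfold rho; lra).
    pose proof (Hp mu H1) as Hpm. pose proof (HB _ (inBall_scal _ mu y H1 (Rlt_le _ _ Hy))).
    replace (p mu) with (Cminus (f (vscal mu y)) (Cminus (f (vscal mu y)) (p mu))) by ring.
    eapply Rle_trans. apply Cmod_triangle. rewrite Cmod_opp. lra. }
  pose proof (rescaled_sum_compare e (fun j => hcoef m Q j w) N c r (2 * eta) Hc ltac:(lra)
                (fun j Hj => Hcoef j ltac:(lia) ltac:(lia))) as Hres.
  pose proof (Hp (RtoC r) ltac:(rewrite Cmod_R, Rabs_right; lra)) as Hpr.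
  unfold approximant. fold c w. cnorm.
  set (SN := csum N (fun i => Cmult (e i) (Cpow (RtoC r) i))) in *.
  set (F := csum N (fun j => Cmult (RtoC ((r / c) ^ j)) (hcoef m Q j w))) in *.
  replace (Cminus (f (vscal (RtoC r) y)) F) with
    (Cplus (Cminus (f (vscal (RtoC r) y)) (p (RtoC r))) (Cplus (Cminus (p (RtoC r)) SN) (Cminus SN F)))
    by ring.
  eapply Rle_trans. apply Cmod_triangle. eapply Rle_trans. apply Rplus_le_compat_l, Cmod_triangle.
  fold rho. lra.
Qed.
End AuIncluded.

Lemma geometric_small K q t : 0 <= K -> 0 <= q < 1 -> 0 < t ->
  exists N : nat, K * (q ^ N / (1 - q)) < t.
Proof.
  intros HK Hq Ht.
  destruct (pow_lt_1_zero q ltac:(rewrite Rabs_right; lra) (t * (1 - q) / (K + 1))) as [N HN].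
  { apply Rdiv_lt_0_compat; [apply Rmult_lt_0_compat|]; lra. }
  exists N. specialize (HN N (le_n N)). rewrite Rabs_right in HN by (apply Rle_ge, pow_le; lra).
  assert (K * q ^ N < t * (1 - q)).
  { apply Rle_lt_trans with ((K + 1) * q ^ N). pose proof (pow_le q N ltac:(lra)). nra.
    apply (Rmult_lt_compat_l (K + 1)) in HN; [|lra].
    replace ((K + 1) * (t * (1 - q) / (K + 1))) with (t * (1 - q)) in HN by (field; lra). lra. }
  replace (K * (q ^ N / (1 - q))) with (K * q ^ N / (1 - q)) by (field; lra).
  apply (Rmult_lt_reg_r (1 - q)). lra.
  replace (K * q ^ N / (1 - q) * (1 - q)) with (K * q ^ N) by (field; lra). lra.
Qed.

Lemma A_trivial_space (Y : CBanach) : (forall y : Y, y = vzero) -> forall f : Y -> Defs.C, in_A f.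
Proof.
  intros Hz f eps Heps. exists (fun _ => f vzero). split; [apply ftp_const|].
  intros y _. rewrite (Hz y). cnorm. replace (Cminus (f vzero) (f vzero)) with (RtoC 0) by ring.
  rewrite Cmod_0. lra.
Qed.

Lemma radial_shrink {Y : CBanach} (f : Y -> Defs.C) : unif_cont_on_ball f ->
  forall eps, 0 < eps -> exists r, (1 / 2 <= r < 1) /\
    forall y, inBall y -> Cmod (Cminus (f y) (f (vscal (RtoC r) y))) < eps.
Proof.
  intros Hu eps Heps. destruct (Hu eps Heps) as [dl [Hdl Hdl2]].
  set (r := 1 - Rmin (dl / 2) (1 / 2)).
  assert (Hr : 1 / 2 <= r < 1 /\ 1 - r < dl).
  { unfold r. pose proof (Rmin_l (dl/2) (1/2)). pose proof (Rmin_r (dl/2) (1/2)).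
    assert (0 < Rmin (dl / 2) (1 / 2)) by (apply Rmin_glb_lt; lra). lra. }
  exists r. split; [apply Hr|]. intros y Hy.
  unfold inBall in Hy. pose proof (vnorm_ge0 _ y).
  apply Hdl2; auto. { unfold inBall. rewrite vnorm_scalR, Rabs_right by lra. nra. }
  rewrite <- (vscal_1C _ y) at 1. rewrite vsub_scal_l, vnorm_scal. cnorm.
  replace (Cminus (RtoC 1) (RtoC r)) with (RtoC (1 - r)) by (apply injective_projections; simpl; ring).
  rewrite Cmod_R, Rabs_right by lra. nra.
Qed.

Lemma small_eta K t : 0 <= K -> 0 < t -> exists eta, (0 < eta <= 1) /\ eta + K * (2 * eta) <= t.
Proof.
  intros HK Ht. exists (Rmin (t / (1 + 2 * K)) 1).
  pose proof (Rmin_l (t / (1 + 2 * K)) 1). pose proof (Rmin_r (t / (1 + 2 * K)) 1).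
  split. { split; [apply Rmin_glb_lt; [apply Rdiv_lt_0_compat|]|]; lra. }
  apply Rle_trans with ((1 + 2 * K) * (t / (1 + 2 * K))).
  - apply (Rmult_le_compat_l (1 + 2 * K)) in H; lra.
  - right. field. lra.
Qed.

Lemma Au_pullback {X Y : CBanach} (f : Y -> Defs.C) (S : X -> Y) (KS : R) :
  Defs.is_linear S -> 1 <= KS -> (forall x, vnorm (S x) <= KS * vnorm x) ->
  in_Au f -> in_Au (fun x => f (vscal (RtoC (/ KS)) (S x))).
Proof.
  intros HlS HKS HS Hf.
  apply (Au_comp_lin f (fun x => vscal (RtoC (/ KS)) (S x))); [apply lin_scal_comp; auto| |auto].
  intros x. rewrite vnorm_scalR, Rabs_right by (left; apply Rinv_0_lt_compat; lra).
  apply (Rmult_le_reg_l KS). lra. rewrite <- Rmult_assoc, Rinv_r, Rmult_1_l by lra. auto.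
Qed.

(** Choice of parameters: [r] from the uniform continuity of [f], [N] from
    the geometric tail, [η] small against the constant  N (2/c)^N,  and [Q]
    approximating  f(S·/KS) ∈ A_u(B_X) = A(B_X)  within [η]. *)
Lemma Au_to_A (X Y : CBanach) (T : Y -> X) (S : X -> Y) :
  Au_eq_A X -> Defs.is_linear T -> is_bounded_op T -> Defs.is_linear S -> is_bounded_op S ->
  (forall y, S (T y) = y) -> forall f : Y -> Defs.C, in_Au f -> in_A f.
Proof.
  intros HX HlT HbT HlS HbS ST f Hf.
  destruct (classic (exists x1 : X, x1 <> vzero)) as [[x1 Hx1]|Hall].
  2:{ apply A_trivial_space. intros y. rewrite <- (ST y).
      assert (T y = vzero) as -> by (apply NNPP; intro; apply Hall; eauto). apply lin_zero; auto. }
  destruct (norming_pair_exists X x1 Hx1) as [phi [x0 Hphi]].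
  destruct (bounded_ge1 S HbS) as [KS [HKS HS]]. destruct (bounded_ge1 T HbT) as [KT [HKT HT]].
  pose proof Hf as [[B HB] [_ Hu]].
  assert (HB' : forall y, inBall y -> Cmod (f y) <= Rmax B 0).
  { intros y Hy. eapply Rle_trans. apply HB; auto. apply Rmax_l. }
  pose proof (Rmax_r B 0) as HB0.
  intros eps Heps.
  destruct (radial_shrink f Hu (eps / 4) ltac:(lra)) as [r [Hr Hshrink]].
  set (q := r / ((1 + r) / 2)).
  assert (Hq : 0 <= q < 1).
  { unfold q. split. apply Rdiv_le_0_compat; lra. apply (Rmult_lt_reg_r ((1 + r) / 2)). lra.
    unfold Rdiv at 1. rewrite Rmult_assoc, Rinv_l, Rmult_1_r by lra. lra. }
  destruct (geometric_small (Rmax B 0 + 1) q (eps / 4) ltac:(lra) Hq ltac:(lra)) as [N HN].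
  set (K := INR N * (2 / / (KS * KT)) ^ N).
  assert (HK : 0 <= K).
  { apply Rmult_le_pos; [apply pos_INR|apply pow_le, Rdiv_le_0_compat; [lra|]].
    apply Rinv_0_lt_compat; nra. }
  destruct (small_eta K (eps / 4) HK ltac:(lra)) as [eta [Heta Heta']].
  destruct (proj1 (HX _) (Au_pullback f S KS HlS HKS HS Hf) eta (proj1 Heta)) as [Q [HQ HQh]].
  destruct (ftp_homogeneous_expansion Q HQ) as [nQ HnQ].
  set (m := Datatypes.S (Nat.max nQ N)).
  exists (approximant X Y T KS KT Q m N r). split; [apply ftp_approximant; auto|].
  intros y Hy.
  pose proof (pointwise_error X Y HX T S HlS ST KS KT HKS HKT HT phi x0 Hphi f (Rmax B 0) Q m N r eta
                Hf HB' (proj1 Heta) HQh (HnQ m ltac:(unfold m; lia)) ltac:(unfold m; lia) Hr y Hy)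
    as Herr.
  pose proof (Hshrink y Hy) as Hfr. fold q in Herr. cnorm.
  replace (Cminus (f y) (approximant X Y T KS KT Q m N r y)) with
    (Cplus (Cminus (f y) (f (vscal (RtoC r) y)))
           (Cminus (f (vscal (RtoC r) y)) (approximant X Y T KS KT Q m N r y))) by ring.
  eapply Rle_lt_trans. apply Cmod_triangle.
  assert ((Rmax B 0 + eta) * (q ^ N / (1 - q)) <= (Rmax B 0 + 1) * (q ^ N / (1 - q))).
  { apply Rmult_le_compat_r; [|lra]. apply Rdiv_le_0_compat; [apply pow_le|]; lra. }
  assert (INR N * ((2 / / (KS * KT)) ^ N * (2 * eta)) = K * (2 * eta)) by (unfold K; ring).
  lra.
Qed.

Theorem lemma2p9 (X Y : CBanach) :
  Au_eq_A X -> isomorphic Y X -> Au_eq_A Y.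
Proof.
  intros HX [T [S [HlT [HbT [HlS [HbS [ST _]]]]]]] f. split.
  - apply (Au_to_A X Y T S); auto.
  - apply (A_to_Au X Y HX T S); auto.
Qed.
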